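(* Let $\gamma>0$, $W,V\in C_{p,\gamma}^{0}(\mathbb{R})$ (possibly complex-valued), $\mathscr{L}\psi:=-\psi''+W\psi'+V\psi$, and for $\lambda\in\mathbb{R}$ let $\mathcal{E}(\lambda):=\{\psi\in C_{p}^{2}(\mathbb{R}) : \mathscr{L}\psi=\lambda\psi\}$. Then: - if $\lambda\in\sigma_{g}^{1}(\mathscr{L})$, then $\mathcal{E}(\lambda)=\{e^{\mathrm{i}k_{0}x}p(x) : \mathcal{D}^{k_{0}}p=\lambda p,\ p\in C_{p,\gamma}^{2}(\mathbb{R})\}$, where $\mathcal{A}(\lambda)=\{[k_{0}]_{\gamma}\}$; - if $\lambda\in\sigma_{g}^{2}(\mathscr{L})$, then $\mathcal{E}(\lambda)=\{e^{\mathrm{i}k_{0}x}(p_{1}(x)+xp_{2}(x)) : \mathcal{D}^{k_{0}}p_{2}=\lambda p_{2},\ \mathcal{D}^{k_{0}}p_{1}=\lambda p_{1}+(2\mathrm{i}k_{0}-W)p_{2}+2p_{2}',\ p_{1},p_{2}\in C_{p,\gamma}^{2}(\mathbb{R})\}$; - if $\lambda\in\sigma_{g}^{3}(\mathscr{L})$, then $\mathcal{E}(\lambda)=\operatorname{span}\{e^{\mathrm{i}kx}p(x) : \mathcal{D}^{k}p=\lambda p,\ [k]_{\gamma}\in\mathcal{A}(\lambda),\ |\mathcal{A}(\lambda)|=2,\ p\in C_{p,\gamma}^{2}(\mathbb{R})\}$.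
   Context: $C_{p}^{0}(I)$: integrable piecewise-continuous functions on $I$ (finitely many discontinuities on each finite subinterval, one-sided improper integrals of $|f|$ converging at each discontinuity); $C_{p}^{l}(I)$: differentiable functions with derivative in $C_{p}^{l-1}(I)$; $C_{p,\gamma}^{l}(\mathbb{R})$: $\gamma$-periodic functions in $C_{p}^{l}(\mathbb{R})$; $[k]_{\gamma}=\{k+2m\pi/\gamma:m\in\mathbb{Z}\}$ for $k\in\mathbb{C}$. Every solution in $C_p^2(\mathbb{R})$ of $\mathscr{L}\psi=\lambda\psi$ has one of the forms (a) $e^{\mathrm{i}k_0x}p(x)$, (b) $e^{\mathrm{i}k_0x}(p_1(x)+xp_2(x))$ with $p_2\not\equiv0$, (c) $e^{\mathrm{i}k_1x}p_1(x)+e^{\mathrm{i}k_2x}p_2(x)$ with $[k_1]_\gamma\ne[k_2]_\gamma$, where $k_0,k_1,k_2\in\mathbb{C}$ and $p,p_1,p_2\in C^2_{p,\gamma}(\mathbb{R})$; the exponents $k$ are called quasimomenta, and $\mathcal{A}(\lambda)$ is the set of congruence classes modulo $2\pi/\gamma$ of quasimomenta of solutions corresponding to $\lambda$ (it has at most two elements; in cases (a),(b) $\mathcal{A}(\lambda)=\{[k_0]_\gamma\}$, in case (c) $\mathcal{A}(\lambda)=\{[k_1]_\gamma,[k_2]_\gamma\}$). $\sigma_{g}^{1}(\mathscr{L})$, $\sigma_{g}^{2}(\mathscr{L})$, $\sigma_{g}^{3}(\mathscr{L})$ are the sets of $\lambda\in\mathbb{R}$ for which $\mathscr{L}\psi=\lambda\psi$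 has a solution $\psi$ of form (a) with $|\mathcal{A}(\lambda)|=1$, of form (b) with $|\mathcal{A}(\lambda)|=1$, and of form (c) with $|\mathcal{A}(\lambda)|=2$, respectively. For $k\in\mathbb{C}$, $\mathcal{D}^{k}:=-\frac{d^{2}}{dx^{2}}+(W-2\mathrm{i}k)\frac{d}{dx}+\mathrm{i}kW+V+k^{2}$. *)

From Stdlib Require Import Reals ZArith List.
From Coquelicot Require Import Coquelicot.
Open Scope R_scope.

Definition cexp (z : C) : C :=
  (exp (Re z) * cos (Im z), exp (Re z) * sin (Im z)).

Definition cdiff (f : R -> C) : Prop :=
  forall x, ex_derive (fun t => fst (f t)) x /\ ex_derive (fun t => snd (f t)) x.
Definition cD (f : R -> C) : R -> C :=
  fun x => (Derive (fun t => fst (f t)) x, Derive (fun t => snd (f t)) x).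

(** C_p^0(R): integrable piecewise-continuous functions: finitely many
    discontinuities on each finite subinterval, and at each discontinuity the
    one-sided improper integrals of |f| converge. *)
Definition PC0 (f : R -> C) : Prop :=
  (forall a b : R, exists s : list R,
      forall x, a <= x <= b -> ~ continuous f x -> In x s) /\
  (forall x, ~ continuous f x -> exists d, 0 < d /\
      ex_RInt_gen (fun t => Cmod (f t)) (at_right x) (at_point (x + d)) /\
      ex_RInt_gen (fun t => Cmod (f t)) (at_point (x - d)) (at_left x)).

Fixpoint Cp (l : nat) (f : R -> C) : Prop :=
  match l with
  | O => PC0 f
  | S l' => cdiff f /\ Cp l' (cD f)
  end.

Definition Cpg (l : nat) (gamma : R) (f : R -> C) : Prop :=
  Cp l f /\ forall x, f (x + gamma) = f x.

Definition congr (gamma : R) (k k' : C) : Prop :=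
  exists m : Z, k' = Cplus k (RtoC (2 * IZR m * PI / gamma)).

Open Scope C_scope.

Definition Lop (W V : R -> C) (psi : R -> C) : R -> C :=
  fun x => - cD (cD psi) x + W x * cD psi x + V x * psi x.

Definition Dk (W V : R -> C) (k : C) (p : R -> C) : R -> C :=
  fun x => - cD (cD p) x + (W x - 2 * Ci * k) * cD p x
           + (Ci * k * W x + V x + k * k) * p x.

Definition Eset (W V : R -> C) (lam : R) (psi : R -> C) : Prop :=
  Cp 2 psi /\ forall x, Lop W V psi x = RtoC lam * psi x.

Definition ebl (k : C) (x : R) : C := cexp (Ci * k * RtoC x).

Definition formA (gamma : R) (psi : R -> C) (k0 : C) : Prop :=
  exists p, Cpg 2 gamma p /\ forall x, psi x = ebl k0 x * p x.
Definition formB (gamma : R) (psi : R -> C) (k0 : C) : Prop :=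
  exists p1 p2, Cpg 2 gamma p1 /\ Cpg 2 gamma p2 /\ (exists x, p2 x <> 0) /\
    forall x, psi x = ebl k0 x * (p1 x + RtoC x * p2 x).
Definition formC (gamma : R) (psi : R -> C) (k1 k2 : C) : Prop :=
  ~ congr gamma k1 k2 /\
  exists p1 p2, Cpg 2 gamma p1 /\ Cpg 2 gamma p2 /\
    forall x, psi x = ebl k1 x * p1 x + ebl k2 x * p2 x.

(** k is a quasimomentum of some (nonzero) solution for lambda, i.e.
    [k]_gamma is an element of A(lambda). *)
Definition inA (gamma : R) (W V : R -> C) (lam : R) (k : C) : Prop :=
  exists psi, Eset W V lam psi /\ (exists x, psi x <> 0) /\
   ( formA gamma psi k \/ formB gamma psi k \/
     (exists k' p1 p2, ~ congr gamma k k' /\ Cpg 2 gamma p1 /\ Cpg 2 gamma p2 /\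
        (exists x, p1 x <> 0) /\ (exists x, p2 x <> 0) /\
        forall x, psi x = ebl k x * p1 x + ebl k' x * p2 x) ).

Definition cardA1 gamma W V lam : Prop :=
  exists k, inA gamma W V lam k /\ forall k', inA gamma W V lam k' -> congr gamma k k'.
Definition cardA2 gamma W V lam : Prop :=
  exists k1 k2, inA gamma W V lam k1 /\ inA gamma W V lam k2 /\ ~ congr gamma k1 k2 /\
    forall k, inA gamma W V lam k -> congr gamma k1 k \/ congr gamma k2 k.

Definition sigma2 gamma W V lam : Prop :=
  (exists psi k0, Eset W V lam psi /\ formB gamma psi k0) /\ cardA1 gamma W V lam.
Definition sigma1 gamma W V lam : Prop :=
  (exists psi k0, Eset W V lam psi /\ (exists x, psi x <> 0) /\ formA gamma psi k0) /\
  cardA1 gamma W V lam /\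
  (* READING: no solution of the (Jordan) form (b) *)
  ~ (exists psi k0, Eset W V lam psi /\ formB gamma psi k0).
Definition sigma3 gamma W V lam : Prop :=
  (exists psi k1 k2, Eset W V lam psi /\ formC gamma psi k1 k2) /\ cardA2 gamma W V lam.

Fixpoint lincomb (l : list (C * (R -> C))) : R -> C :=
  match l with
  | nil => fun _ => 0
  | (c, f) :: l' => fun x => c * f x + lincomb l' x
  end.
Definition cspan (S : (R -> C) -> Prop) (psi : R -> C) : Prop :=
  exists l, List.Forall (fun cf : C * (R -> C) => S (snd cf)) l /\ forall x, psi x = lincomb l x.

(* Since W and V are gamma-periodic, the shift by gamma maps the solution space of
   L psi = lam psi to itself. This space is two-dimensional because the Cauchy problem has a
   unique solution: |psi|^2 + |psi'|^2 obeys a Gronwall inequality whose rate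
   1 + |lam| + 2|W| + |V| is integrable near every point, if need be as an improper integral.
   A solution with psi (x + gamma) = mu psi x factors as e^{ikx} p x with e^{ik gamma} = mu and
   p periodic, and L (e^{ikx} p) = e^{ikx} D^k p. In case sigma^1 the monodromy has a single
   eigenvalue and no Jordan block, so it is scalar and every solution is of Floquet type; in case
   sigma^2 a Jordan chain e^{ikx} p2, e^{ikx} (p1 + x p2) spans the solutions; in case sigma^3
   two Floquet solutions with distinct multipliers do. The equations for p1 and p2 come from
   separating the periodic coefficients of 1 and x in L psi = lam psi. *)

From Stdlib Require Import Reals ZArith List Lra Lia FunctionalExtensionality Classical.
From Coquelicot Require Import Coquelicot.
Open Scope R_scope.

Lemma Cmult_eq_reg_l (a b c : C) : (a * b)%C = (a * c)%C -> a <> 0%C -> b = c.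
Proof.
  intros E Ha; replace b with (/ a * (a * b))%C by (field; assumption).
  rewrite E; field; assumption.
Qed.

Lemma Cmult_eq_0_r (a b : C) : (a * b)%C = 0%C -> a <> 0%C -> b = 0%C.
Proof. intros E Ha; apply (Cmult_eq_reg_l a); [rewrite E; ring | assumption]. Qed.

(** * Derivatives of complex-valued functions *)

Lemma is_derive_eq (f : R -> R) x d d' : is_derive f x d -> d = d' -> is_derive f x d'.
Proof. now intros H <-. Qed.

Lemma is_derive_Rmult (f g : R -> R) x df dg :
  is_derive f x df -> is_derive g x dg -> is_derive (fun t => f t * g t) x (df * g x + f x * dg).
Proof. intros Hf Hg. apply (is_derive_mult f g x df dg Hf Hg), Rmult_comm. Qed.

Definition is_cderive (f f' : R -> C) : Prop :=
  forall x, is_derive (fun t => fst (f t)) x (fst (f' x)) /\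
            is_derive (fun t => snd (f t)) x (snd (f' x)).

Lemma is_cderive_cD f f' : is_cderive f f' -> cD f = f'.
Proof.
  intros H; apply functional_extensionality; intros x; destruct (H x) as [H1 H2].
  apply injective_projections; apply is_derive_unique; assumption.
Qed.

Lemma is_cderive_cdiff f f' : is_cderive f f' -> cdiff f.
Proof. intros H x; destruct (H x); split; eexists; eassumption. Qed.

Lemma cdiff_is_cderive f : cdiff f -> is_cderive f (cD f).
Proof. intros H x; destruct (H x); split; apply Derive_correct; assumption. Qed.

Lemma is_cderive_plus f g f' g' : is_cderive f f' -> is_cderive g g' ->
  is_cderive (fun x => f x + g x)%C (fun x => f' x + g' x)%C.
Proof.
  intros Hf Hg x; destruct (Hf x) as [F1 F2], (Hg x) as [G1 G2];
    split; now apply (is_derive_plus (V := R_NormedModule)).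
Qed.

Lemma is_cderive_mult f g f' g' : is_cderive f f' -> is_cderive g g' ->
  is_cderive (fun x => f x * g x)%C (fun x => f' x * g x + f x * g' x)%C.
Proof.
  intros Hf Hg x; destruct (Hf x) as [F1 F2], (Hg x) as [G1 G2]; simpl; split.
  - eapply is_derive_eq;
      [apply (is_derive_minus (V := R_NormedModule)); apply is_derive_Rmult; eassumption|].
    unfold minus, plus, opp; simpl; ring.
  - eapply is_derive_eq;
      [apply (is_derive_plus (V := R_NormedModule)); apply is_derive_Rmult; eassumption|].
    unfold minus, plus, opp; simpl; ring.
Qed.

Lemma is_cderive_const (c : C) : is_cderive (fun _ => c) (fun _ => 0%C).
Proof. intros x; split; exact (is_derive_const _ _). Qed.

Lemma is_cderive_RtoC : is_cderive RtoC (fun _ => 1%C).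
Proof. intros x; split; [exact (is_derive_id _) | exact (is_derive_const _ _)]. Qed.

Lemma is_cderive_scal (c : C) f f' : is_cderive f f' ->
  is_cderive (fun x => c * f x)%C (fun x => c * f' x)%C.
Proof.
  intros H.
  replace (fun x => c * f' x)%C with (fun x => 0 * f x + c * f' x)%C
    by (apply functional_extensionality; intros; ring).
  apply is_cderive_mult; [apply is_cderive_const | exact H].
Qed.

Lemma is_cderive_shift f f' (g : R) :
  is_cderive f f' -> is_cderive (fun x => f (x + g)) (fun x => f' (x + g)).
Proof.
  intros H x; destruct (H (x + g)) as [H1 H2].
  assert (Hg : is_derive (fun t => t + g) x 1)
    by (eapply is_derive_eq; [apply (is_derive_plus (V := R_NormedModule));
          [exact (is_derive_id _) | exact (is_derive_const _ _)] | apply Rplus_0_r]).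
  split; eapply is_derive_eq; try exact (is_derive_comp _ _ _ _ _ H1 Hg);
    try exact (is_derive_comp _ _ _ _ _ H2 Hg); apply Rmult_1_l.
Qed.

Lemma cD_shift f (g : R) x : cD (fun t => f (t + g)) x = cD f (x + g).
Proof.
  unfold cD, Derive; f_equal; f_equal; apply Lim_ext; intros y;
    now replace (x + y + g) with (x + g + y) by ring.
Qed.

(** * Exponentials and Floquet multipliers *)

Lemma ebl_components k x :
  ebl k x = (exp (- snd k * x) * cos (fst k * x), exp (- snd k * x) * sin (fst k * x)).
Proof.
  unfold ebl, cexp; destruct k as [a b]; simpl; f_equal; f_equal; f_equal; ring.
Qed.

Lemma is_cderive_ebl k : is_cderive (ebl k) (fun x => Ci * k * ebl k x)%C.
Proof.
  intros x; destruct k as [a b].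
  split; (eapply is_derive_ext; [intros t; rewrite ebl_components; reflexivity|]);
    rewrite ebl_components; simpl; auto_derive; auto; ring.
Qed.

Lemma cexp_plus a b : cexp (a + b)%C = (cexp a * cexp b)%C.
Proof.
  destruct a as [a1 a2], b as [b1 b2]; unfold cexp; simpl.
  rewrite exp_plus, cos_plus, sin_plus; apply injective_projections; simpl; ring.
Qed.

Lemma ebl_plus_r k x y : ebl k (x + y) = (ebl k x * ebl k y)%C.
Proof. unfold ebl; rewrite <- cexp_plus, RtoC_plus; f_equal; ring. Qed.

Lemma ebl_plus_l k k' x : ebl (k + k')%C x = (ebl k x * ebl k' x)%C.
Proof. unfold ebl; rewrite <- cexp_plus; f_equal; ring. Qed.

Lemma ebl_neq_0 k x : ebl k x <> 0%C.
Proof.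
  rewrite ebl_components; intros H; injection H as H1 H2.
  pose proof (exp_pos (- snd k * x)).
  apply (cos_sin_0 (fst k * x)); split; nra.
Qed.

Lemma ebl_opp_mul k x : (ebl (- k) x * ebl k x)%C = 1%C.
Proof.
  rewrite <- ebl_plus_l; replace (- k + k)%C with (RtoC 0) by ring.
  rewrite ebl_components; simpl; rewrite !Rmult_0_l, Ropp_0, Rmult_0_l, exp_0, cos_0, sin_0.
  apply injective_projections; simpl; ring.
Qed.

Lemma ebl_opp k x : ebl (- k) x = (/ ebl k x)%C.
Proof.
  apply (Cmult_eq_reg_l (ebl k x)); [|apply ebl_neq_0].
  rewrite Cmult_comm, ebl_opp_mul, Cinv_r; [reflexivity | apply ebl_neq_0].
Qed.

Definition multiplier (gamma : R) (k : C) : C := ebl k gamma.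

Lemma ebl_shift k g x : ebl k (x + g) = (multiplier g k * ebl k x)%C.
Proof. unfold multiplier; rewrite ebl_plus_r; ring. Qed.

Lemma multiplier_neq_0 gamma k : multiplier gamma k <> 0%C.
Proof. apply ebl_neq_0. Qed.

Lemma cos_sin_2PI_IZR (m : Z) : cos (2 * IZR m * PI) = 1 /\ sin (2 * IZR m * PI) = 0.
Proof.
  assert (Hnat : forall n : nat, cos (2 * INR n * PI) = 1 /\ sin (2 * INR n * PI) = 0).
  { intros n; rewrite <- (Rplus_0_l (2 * INR n * PI)), cos_period, sin_period.
    split; [apply cos_0 | apply sin_0]. }
  destruct (Z_le_gt_dec 0 m) as [H|H].
  - rewrite <- (Z2Nat.id m), <- INR_IZR_INZ by lia; apply Hnat.
  - destruct (Hnat (Z.to_nat (- m))) as [Hc Hs].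
    rewrite INR_IZR_INZ, Z2Nat.id, opp_IZR in Hc, Hs by lia.
    replace (2 * - IZR m * PI) with (- (2 * IZR m * PI)) in Hc, Hs by ring.
    rewrite cos_neg in Hc; rewrite sin_neg in Hs; split; lra.
Qed.

Lemma ebl_lattice gamma (m : Z) : gamma <> 0 ->
  ebl (RtoC (2 * IZR m * PI / gamma)) gamma = 1%C.
Proof.
  intros Hg; rewrite ebl_components; simpl.
  replace (2 * IZR m * PI / gamma * gamma) with (2 * IZR m * PI) by (field; auto).
  destruct (cos_sin_2PI_IZR m) as [-> ->].
  rewrite Ropp_0, !Rmult_0_l, exp_0; apply injective_projections; simpl; ring.
Qed.

Lemma congr_sym gamma k k' : congr gamma k k' -> congr gamma k' k.
Proof.
  intros [m ->]; exists (- m)%Z; rewrite opp_IZR, <- Cplus_assoc, <- RtoC_plus.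
  replace (2 * IZR m * PI / gamma + 2 * - IZR m * PI / gamma) with 0 by (unfold Rdiv; ring).
  ring.
Qed.

Lemma congr_trans gamma k1 k2 k3 : congr gamma k1 k2 -> congr gamma k2 k3 -> congr gamma k1 k3.
Proof.
  intros [m ->] [n ->]; exists (m + n)%Z; rewrite plus_IZR, <- Cplus_assoc, <- RtoC_plus.
  do 2 f_equal; unfold Rdiv; ring.
Qed.

Lemma multiplier_congr gamma k k' : gamma <> 0 -> congr gamma k k' ->
  multiplier gamma k = multiplier gamma k'.
Proof.
  intros Hg [m ->]; unfold multiplier; rewrite ebl_plus_l, ebl_lattice by assumption; ring.
Qed.

Lemma cos_eq_1_2PI_IZR th : cos th = 1 -> exists m : Z, th = 2 * IZR m * PI.
Proof.
  intros Hc.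
  assert (Hs : sin th = 0) by (pose proof (sin2_cos2 th); unfold Rsqr in *; nra).
  destruct (sin_eq_0_0 th Hs) as [z ->].
  destruct (Zeven_odd_dec z) as [Ev|Od].
  - destruct (Zeven_ex z Ev) as [m ->]; exists m; rewrite mult_IZR; ring.
  - exfalso; destruct (Zodd_ex z Od) as [m ->].
    rewrite plus_IZR, mult_IZR in Hc.
    replace ((2 * IZR m + 1) * PI) with (PI + 2 * IZR m * PI) in Hc by ring.
    destruct (cos_sin_2PI_IZR m) as [Hc2 _].
    rewrite cos_plus, cos_PI, sin_PI, Hc2 in Hc; lra.
Qed.

Lemma congr_of_multiplier_eq gamma k k' : gamma <> 0 ->
  multiplier gamma k = multiplier gamma k' -> congr gamma k k'.
Proof.
  intros Hg E.
  assert (Hs : ebl (k' - k) gamma = 1%C).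
  { apply (Cmult_eq_reg_l (ebl k gamma)); [|apply ebl_neq_0].
    rewrite <- ebl_plus_l; replace (k + (k' - k))%C with k' by ring.
    symmetry; rewrite Cmult_1_r; exact E. }
  replace k' with (k + (k' - k))%C by ring.
  destruct (k' - k)%C as [a b]; rewrite ebl_components in Hs; simpl in Hs.
  injection Hs as Hre Him.
  assert (HA : exp (- b * gamma) = 1).
  { pose proof (sin2_cos2 (a * gamma)) as Hsc; pose proof (exp_pos (- b * gamma)).
    unfold Rsqr in Hsc.
    assert (Hsq : exp (- b * gamma) ^ 2
                = (exp (- b * gamma) * cos (a * gamma)) ^ 2 + (exp (- b * gamma) * sin (a * gamma)) ^ 2)
      by (transitivity (exp (- b * gamma) ^ 2 * (sin (a * gamma) * sin (a * gamma)
                                                 + cos (a * gamma) * cos (a * gamma)));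
          [rewrite Hsc | ]; ring).
    rewrite Hre, Him in Hsq; nra. }
  assert (Hb : b = 0).
  { rewrite <- exp_0 in HA; apply exp_inv in HA; apply (Rmult_eq_reg_r gamma); lra. }
  rewrite HA, Rmult_1_l in Hre.
  destruct (cos_eq_1_2PI_IZR _ Hre) as [m Hm].
  exists m; f_equal; rewrite Hb; unfold RtoC; f_equal; rewrite <- Hm; field; assumption.
Qed.

Lemma multiplier_surjective gamma (c : C) : 0 < gamma -> c <> 0%C ->
  exists k, multiplier gamma k = c.
Proof.
  intros Hg Hc; destruct c as [u v].
  set (r := sqrt (u * u + v * v)).
  assert (Huv : 0 < u * u + v * v).
  { destruct (Req_dec u 0), (Req_dec v 0); [subst; now elim Hc | nra..]. }
  assert (Hr : 0 < r) by (apply sqrt_lt_R0; assumption).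
  assert (Hr2 : r * r = u * u + v * v) by (apply sqrt_sqrt; lra).
  assert (Hu : -1 <= u / r <= 1).
  { split; apply (Rmult_le_reg_r r); auto; field_simplify; nra. }
  set (th := if Rle_dec 0 v then acos (u / r) else - acos (u / r)).
  assert (Cth : cos th = u / r).
  { unfold th; destruct (Rle_dec 0 v); [|rewrite cos_neg]; apply cos_acos; assumption. }
  assert (Sth : sin th = v / r).
  { assert (E : 1 - (u / r)² = (v / r) * (v / r))
      by (unfold Rsqr; field_simplify_eq; lra).
    assert (Hvr : 0 <= v -> 0 <= v / r) by (intros; apply Rdiv_le_0_compat; lra).
    assert (Hvr' : v < 0 -> v / r < 0) by (intros; apply Rdiv_neg_pos; lra).
    unfold th; destruct (Rle_dec 0 v).
    - rewrite sin_acos, E by assumption; apply sqrt_square; auto.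
    - rewrite sin_neg, sin_acos, E by assumption.
      replace ((v / r) * (v / r)) with ((- (v / r)) * (- (v / r))) by ring.
      rewrite sqrt_square; [ring | lra]. }
  exists (th / gamma, - ln r / gamma).
  unfold multiplier; rewrite ebl_components; simpl.
  replace (- (- ln r / gamma) * gamma) with (ln r) by (field; lra).
  replace (th / gamma * gamma) with th by (field; lra).
  rewrite exp_ln, Cth, Sth by assumption.
  apply injective_projections; simpl; field; lra.
Qed.

Lemma ebl_lattice_periodic gamma (m : Z) x : gamma <> 0 ->
  ebl (RtoC (2 * IZR m * PI / gamma)) (x + gamma) = ebl (RtoC (2 * IZR m * PI / gamma)) x.
Proof.
  intros Hg; rewrite ebl_shift; unfold multiplier; rewrite ebl_lattice by assumption; ring.
Qed.

(** * Piecewise continuous functions *)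

Lemma continuous_C_iff (f : R -> C) x :
  continuous f x <-> continuous (fun t => fst (f t)) x /\ continuous (fun t => snd (f t)) x.
Proof.
  split.
  - intros H; split; apply (continuous_comp f); try assumption;
      [apply continuous_fst | apply continuous_snd].
  - intros [H1 H2]; apply filterlim_locally; intros eps.
    apply filterlim_locally with (eps := eps) in H1.
    apply filterlim_locally with (eps := eps) in H2.
    generalize (filter_and _ _ H1 H2); apply filter_imp; intros t [A B]; split; assumption.
Qed.

Lemma continuous_Cplus (f g : R -> C) x : continuous f x -> continuous g x ->
  continuous (fun t => f t + g t)%C x.
Proof. apply (continuous_plus (V := C_R_NormedModule)). Qed.

Lemma continuous_Cmult (f g : R -> C) x : continuous f x -> continuous g x ->
  continuous (fun t => f t * g t)%C x.
Proof.
  rewrite !continuous_C_iff; intros [F1 F2] [G1 G2]; simpl; split.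
  - apply (continuous_minus (V := R_NormedModule));
      [exact (continuous_mult _ _ _ F1 G1) | exact (continuous_mult _ _ _ F2 G2)].
  - apply (continuous_plus (V := R_NormedModule));
      [exact (continuous_mult _ _ _ F1 G2) | exact (continuous_mult _ _ _ F2 G1)].
Qed.

Definition cnorm (f : R -> C) (t : R) : R := Cmod (f t).

Lemma cnorm_ge_0 f t : 0 <= cnorm f t.
Proof. apply Cmod_ge_0. Qed.

Lemma continuous_cnorm (f : R -> C) x : continuous f x -> continuous (cnorm f) x.
Proof.
  rewrite continuous_C_iff; intros [F1 F2]; apply continuous_sqrt_comp.
  apply (continuous_ext (fun t => fst (f t) * fst (f t) + snd (f t) * snd (f t)));
    [intros; simpl; ring|].
  apply (continuous_plus (V := R_NormedModule));
    [exact (continuous_mult _ _ _ F1 F1) | exact (continuous_mult _ _ _ F2 F2)].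
Qed.

Lemma is_cderive_continuous f f' x : is_cderive f f' -> continuous f x.
Proof.
  intros H; destruct (H x) as [H1 H2]; apply continuous_C_iff;
    split; apply (ex_derive_continuous (V := R_NormedModule)); eexists; eassumption.
Qed.

Lemma cdiff_continuous f x : cdiff f -> continuous f x.
Proof. intros H; apply (is_cderive_continuous f (cD f)), cdiff_is_cderive, H. Qed.

Definition punctured_continuous {U : UniformSpace} (f : R -> U) x d : Prop :=
  forall t, t <> x -> Rabs (t - x) <= d -> continuous f t.

Lemma punctured_continuous_mono {U : UniformSpace} (f : R -> U) x d d' :
  d' <= d -> punctured_continuous f x d -> punctured_continuous f x d'.
Proof. intros Hd H t Htx Ht; apply H; lra. Qed.

Definition same_side x del u v : Prop :=
  x < u < x + del /\ x < v < x + del \/ x - del < u < x /\ x - del < v < x.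

Lemma same_side_mono x del del' u v : del <= del' -> same_side x del u v -> same_side x del' u v.
Proof. unfold same_side; lra. Qed.

Lemma same_side_sym x del u v : same_side x del u v -> same_side x del v u.
Proof. unfold same_side; lra. Qed.

Lemma ex_RInt_same_side (h : R -> R) x d u v :
  punctured_continuous h x d -> same_side x d u v -> ex_RInt h u v.
Proof.
  intros Hc Huv; apply (ex_RInt_continuous (V := R_CompleteNormedModule)); intros w Hw.
  unfold Rmin, Rmax, same_side in *; apply Hc;
    destruct (Rle_dec u v); try apply Rabs_le; lra.
Qed.

(** Local integrability of [h] at [x] that allows an improper singularity at [x] itself: the
    intervals stay on one side of [x]. *)
Definition small_RInt_at (h : R -> R) x : Prop :=
  forall eps, 0 < eps -> exists del, 0 < del /\
    forall s t, s <= t -> same_side x del s t -> RInt h s t <= eps.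

Lemma small_RInt_at_continuous h x d : 0 < d -> continuous h x -> punctured_continuous h x d ->
  small_RInt_at h x.
Proof.
  intros Hd Hx Hc eps Heps.
  apply filterlim_locally with (eps := mkposreal 1 Rlt_0_1) in Hx.
  destruct Hx as [d1 Hd1].
  set (M := Rabs (h x) + 1).
  assert (HM : 0 < M) by (unfold M; pose proof (Rabs_pos (h x)); lra).
  exists (Rmin (Rmin d1 d) (eps / M)); split.
  { repeat apply Rmin_pos; try lra; [apply cond_pos | apply Rdiv_lt_0_compat; lra]. }
  intros s t Hst Hside.
  pose proof (Rmin_l (Rmin d1 d) (eps / M)); pose proof (Rmin_r (Rmin d1 d) (eps / M)).
  pose proof (Rmin_l d1 d); pose proof (Rmin_r d1 d).
  apply Rle_trans with (M * (t - s)).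
  - eapply Rle_trans; [apply (RInt_le h (fun _ => M)); auto|].
    + apply (ex_RInt_same_side h x d); [assumption | eapply same_side_mono; [|eassumption]; lra].
    + apply ex_RInt_const.
    + intros u Hu; assert (Hb : Rabs (h u - h x) < 1).
      { apply (Hd1 u); change (Rabs (u - x) < d1); unfold same_side in Hside; apply Rabs_lt_between; lra. }
      pose proof (Rabs_triang_inv (h u) (h x)); pose proof (Rle_abs (h u)); unfold M; lra.
    + rewrite RInt_const; unfold scal; simpl; unfold mult; simpl; lra.
  - apply (Rmult_le_reg_l (/ M)); [apply Rinv_0_lt_compat; lra|].
    unfold same_side in Hside; replace (/ M * (M * (t - s))) with (t - s) by (field; lra).
    replace (/ M * eps) with (eps / M) by (unfold Rdiv; ring); lra.
Qed.

Lemma small_RInt_at_plus h1 h2 x d : 0 < d -> punctured_continuous h1 x d -> punctured_continuous h2 x d ->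
  small_RInt_at h1 x -> small_RInt_at h2 x -> small_RInt_at (fun t => h1 t + h2 t) x.
Proof.
  intros Hd C1 C2 S1 S2 eps Heps.
  destruct (S1 (eps / 2)) as [d1 [Hd1 H1]]; [lra|].
  destruct (S2 (eps / 2)) as [d2 [Hd2 H2]]; [lra|].
  exists (Rmin (Rmin d1 d2) d); split.
  { repeat apply Rmin_pos; assumption. }
  intros s t Hst Hside.
  pose proof (Rmin_l (Rmin d1 d2) d); pose proof (Rmin_r (Rmin d1 d2) d).
  pose proof (Rmin_l d1 d2); pose proof (Rmin_r d1 d2).
  rewrite (RInt_plus (V := R_CompleteNormedModule));
    try (eapply ex_RInt_same_side; [eassumption | eapply same_side_mono; [|eassumption]; lra]).
  assert (RInt h1 s t <= eps / 2) by (apply H1; [|eapply same_side_mono; [|eassumption]]; lra).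
  assert (RInt h2 s t <= eps / 2) by (apply H2; [|eapply same_side_mono; [|eassumption]]; lra).
  unfold plus; simpl; lra.
Qed.

Lemma small_RInt_at_scal c h x d : 0 <= c -> 0 < d -> punctured_continuous h x d ->
  small_RInt_at h x -> small_RInt_at (fun t => c * h t) x.
Proof.
  intros Hc Hd Ch Sh eps Heps.
  destruct (Sh (eps / (c + 1))) as [d1 [Hd1 H1]]; [apply Rdiv_lt_0_compat; lra|].
  exists (Rmin d1 d); split; [apply Rmin_pos; assumption|].
  intros s t Hst Hside; pose proof (Rmin_l d1 d); pose proof (Rmin_r d1 d).
  rewrite (RInt_scal (V := R_CompleteNormedModule));
    [|eapply ex_RInt_same_side; [eassumption | eapply same_side_mono; [|eassumption]; lra]].
  assert (Hs : RInt h s t <= eps / (c + 1))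
    by (apply H1; [|eapply same_side_mono; [|eassumption]]; lra).
  unfold scal; simpl; unfold mult; simpl.
  apply Rle_trans with (c * (eps / (c + 1))); [apply Rmult_le_compat_l; assumption|].
  apply (Rmult_le_reg_r (c + 1)); [lra|]; field_simplify; nra.
Qed.

Lemma small_RInt_at_le g h x d : 0 < d -> punctured_continuous g x d -> punctured_continuous h x d ->
  (forall t, t <> x -> Rabs (t - x) <= d -> g t <= h t) -> small_RInt_at h x -> small_RInt_at g x.
Proof.
  intros Hd Cg Ch Hle Sh eps Heps; destruct (Sh eps Heps) as [d1 [Hd1 H1]].
  exists (Rmin d1 d); split; [apply Rmin_pos; assumption|].
  intros s t Hst Hside; pose proof (Rmin_l d1 d); pose proof (Rmin_r d1 d).
  assert (Hs : same_side x d s t) by (eapply same_side_mono; [|eassumption]; lra).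
  eapply Rle_trans; [apply RInt_le; [assumption | eapply ex_RInt_same_side; eassumption..|]|].
  - intros u Hu; unfold same_side in Hs; apply Hle; [intros ->; lra | apply Rabs_le; lra].
  - apply H1; [|eapply same_side_mono; [|exact Hside]]; lra.
Qed.

Lemma RInt_cauchy_of_is_RInt_gen {F : (R -> Prop) -> Prop} {FF : ProperFilter F} (h : R -> R) b l :
  is_RInt_gen h F (at_point b) l -> forall eps : posreal, exists P, F P /\
    forall u v, P u -> P v -> ex_RInt h u b /\ Rabs (RInt h u b - RInt h v b) < eps.
Proof.
  intros Hl eps.
  assert (He2 : 0 < eps / 2) by (pose proof (cond_pos eps); lra).
  destruct (Hl _ (locally_ball l (mkposreal _ He2))) as [Q Rb HQ HR HP].
  exists Q; split; [assumption|]; intros u v Hu Hv.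
  destruct (HP u b Hu HR) as [yu [Hyu Bu]], (HP v b Hv HR) as [yv [Hyv Bv]]; simpl in *.
  change (Rabs (yu - l) < eps / 2) in Bu; change (Rabs (yv - l) < eps / 2) in Bv.
  rewrite (is_RInt_unique _ _ _ _ Hyu), (is_RInt_unique _ _ _ _ Hyv).
  split; [eexists; eassumption|].
  apply Rabs_lt_between in Bu, Bv; apply Rabs_lt_between; lra.
Qed.

Lemma ex_RInt_gen_of_RInt_cauchy {F : (R -> Prop) -> Prop} {FF : ProperFilter F} (h : R -> R) b :
  F (fun a => ex_RInt h a b) ->
  (forall eps : posreal, exists P, F P /\
     forall u v, P u -> P v -> Rabs (RInt h u b - RInt h v b) < eps) ->
  ex_RInt_gen h F (at_point b).
Proof.
  intros Hex HC.
  destruct (proj1 (@filterlim_locally_closely R R_CompleteSpace F FF (fun a => RInt h a b)))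
    as [l Hl].
  { apply (proj2 (@filterlim_closely R R_UniformSpace F _ (fun a => RInt h a b))).
    intros eps; destruct (HC eps) as [P [HP HPc]]; exists P; split; [assumption|].
    intros u v Hu Hv; change (Rabs (RInt h v b - RInt h u b) < eps).
    rewrite Rabs_minus_sym; apply HPc; assumption. }
  exists l; intros P HP.
  apply Filter_prod with (Q := fun a => P (RInt h a b) /\ ex_RInt h a b) (R := fun c => c = b).
  - apply filter_and; [apply Hl|]; assumption.
  - reflexivity.
  - intros a c [Pa Ha] ->; exists (RInt h a b); split; [exact (RInt_correct h a b Ha) | exact Pa].
Qed.

Lemma small_RInt_at_of_ex_RInt_gen h x d b1 b2 : 0 < d -> punctured_continuous h x d ->
  ex_RInt_gen h (at_right x) (at_point b1) -> ex_RInt_gen h (at_point b2) (at_left x) ->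
  small_RInt_at h x.
Proof.
  intros Hd Hc [l1 H1] [l2 H2] eps Heps.
  apply is_RInt_gen_swap in H2.
  destruct (RInt_cauchy_of_is_RInt_gen h b1 l1 H1 (mkposreal eps Heps)) as [P1 [[e1 He1] HP1]].
  destruct (RInt_cauchy_of_is_RInt_gen h b2 _ H2 (mkposreal eps Heps)) as [P2 [[e2 He2] HP2]].
  assert (Key : forall b (P : R -> Prop) s t, ex_RInt h s t -> P s -> P t ->
             (forall u v, P u -> P v -> ex_RInt h u b /\ Rabs (RInt h u b - RInt h v b) < eps) ->
             RInt h s t <= eps).
  { intros b P s t Hst Ps Pt HP.
    destruct (HP s t Ps Pt) as [_ Hlt], (HP t s Pt Ps) as [Htb _].
    rewrite <- (RInt_Chasles h s t b Hst Htb) in Hlt.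
    unfold plus in Hlt; simpl in Hlt; apply Rabs_lt_between in Hlt; lra. }
  exists (Rmin d (Rmin e1 e2)); split; [repeat apply Rmin_pos; try apply cond_pos; lra|].
  intros s t Hst Hside.
  pose proof (Rmin_l d (Rmin e1 e2)); pose proof (Rmin_r d (Rmin e1 e2)).
  pose proof (Rmin_l e1 e2); pose proof (Rmin_r e1 e2).
  assert (Hex : ex_RInt h s t)
    by (eapply ex_RInt_same_side; [eassumption | eapply same_side_mono; [|exact Hside]; lra]).
  assert (Hball : forall e u, Rabs (u - x) < e -> ball x e u) by (intros; assumption).
  unfold same_side in Hside; destruct Hside as [[Hs Ht]|[Hs Ht]].
  - apply (Key b1 P1); [exact Hex | apply He1; [apply Hball, Rabs_lt_between|]; lra.. | exact HP1].
  - apply (Key b2 P2); [exact Hex | apply He2; [apply Hball, Rabs_lt_between|]; lra.. | exact HP2].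
Qed.

Lemma ex_RInt_punctured_edge (h : R -> R) x d u : punctured_continuous h x d ->
  (x < u <= x + d -> ex_RInt h u (x + d)) /\ (x - d <= u < x -> ex_RInt h u (x - d)).
Proof.
  intros Hc; split; intros Hu; apply (ex_RInt_continuous (V := R_CompleteNormedModule));
    intros w Hw; unfold Rmin, Rmax in Hw; apply Hc;
    [ destruct (Rle_dec u (x + d)) | destruct (Rle_dec u (x + d))
    | destruct (Rle_dec u (x - d)) | destruct (Rle_dec u (x - d)) ];
    try (intros ->; lra); apply Rabs_le; lra.
Qed.

Lemma small_RInt_at_abs h x d : 0 < d -> (forall t, 0 <= h t) -> punctured_continuous h x d ->
  small_RInt_at h x -> forall eps, 0 < eps -> exists del, 0 < del /\ del <= d /\
    forall u v, same_side x del u v -> Rabs (RInt h u v) < eps.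
Proof.
  intros Hd Hpos Hc Hs eps Heps; destruct (Hs (eps / 2)) as [del [Hdel Hdel2]]; [lra|].
  exists (Rmin del d); split; [apply Rmin_pos; assumption|]; split; [apply Rmin_r|].
  intros u v Huv; pose proof (Rmin_l del d); pose proof (Rmin_r del d).
  assert (Huv' : same_side x d u v) by (eapply same_side_mono; [|exact Huv]; lra).
  assert (Hex : ex_RInt h u v) by (eapply ex_RInt_same_side; eassumption).
  destruct (Rle_dec u v).
  - assert (RInt h u v <= eps / 2) by (apply Hdel2; [|eapply same_side_mono; [|exact Huv]]; lra).
    assert (0 <= RInt h u v) by (apply RInt_ge_0; auto).
    rewrite Rabs_right; lra.
  - assert (RInt h v u <= eps / 2)
      by (apply Hdel2; [|eapply same_side_mono; [|apply same_side_sym; exact Huv]]; lra).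
    assert (0 <= RInt h v u)
      by (apply RInt_ge_0; [lra | apply ex_RInt_swap; assumption | intros; apply Hpos]).
    rewrite <- (opp_RInt_swap h) by (apply ex_RInt_swap; assumption).
    unfold opp; simpl; rewrite Rabs_Ropp, Rabs_right; lra.
Qed.

Lemma ex_RInt_gen_of_small_RInt_at h x d : 0 < d -> (forall t, 0 <= h t) ->
  punctured_continuous h x d -> small_RInt_at h x ->
  ex_RInt_gen h (at_right x) (at_point (x + d)) /\ ex_RInt_gen h (at_point (x - d)) (at_left x).
Proof.
  intros Hd Hpos Hc Hs.
  assert (Hcauchy : forall eps : posreal, exists del, 0 < del /\ del <= d /\
            forall u v b, same_side x del u v -> ex_RInt h u b -> ex_RInt h v b ->
              Rabs (RInt h u b - RInt h v b) < eps).
  { intros eps; destruct (small_RInt_at_abs h x d Hd Hpos Hc Hs eps (cond_pos eps))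
      as [del [Hdel [Hdeld Hsmall]]].
    exists del; split; [|split]; try assumption; intros u v b Huv Hu Hv.
    assert (Huv' : ex_RInt h u v)
      by (eapply ex_RInt_same_side; [eassumption | eapply same_side_mono; [|exact Huv]; lra]).
    pose proof (RInt_Chasles h u v b Huv' Hv) as E; unfold plus in E; simpl in E.
    replace (RInt h u b - RInt h v b) with (RInt h u v) by lra; apply Hsmall, Huv. }
  assert (Hedge := fun u => ex_RInt_punctured_edge h x d u Hc).
  assert (Hnear : forall e u, ball x e u -> x - e < u < x + e)
    by (intros e u Hu; change (Rabs (u - x) < e) in Hu; apply Rabs_lt_between in Hu; lra).
  split.
  - apply ex_RInt_gen_of_RInt_cauchy.
    + exists (mkposreal d Hd); intros u Hu Hxu; apply Hnear in Hu; simpl in Hu; apply Hedge; lra.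
    + intros eps; destruct (Hcauchy eps) as [del [Hdel [Hdeld Hdel2]]].
      exists (fun u => x < u < x + del); split.
      * exists (mkposreal del Hdel); intros u Hu Hxu; apply Hnear in Hu; simpl in Hu; lra.
      * intros u v Hu Hv; apply Hdel2; [unfold same_side; lra | apply Hedge; lra..].
  - destruct (ex_RInt_gen_of_RInt_cauchy (F := at_left x) h (x - d)) as [l Hl].
    + exists (mkposreal d Hd); intros u Hu Hxu; apply Hnear in Hu; simpl in Hu; apply Hedge; lra.
    + intros eps; destruct (Hcauchy eps) as [del [Hdel [Hdeld Hdel2]]].
      exists (fun u => x - del < u < x); split.
      * exists (mkposreal del Hdel); intros u Hu Hxu; apply Hnear in Hu; simpl in Hu; lra.
      * intros u v Hu Hv; apply Hdel2; [unfold same_side; lra | apply Hedge; lra..].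
    + exists (opp l); apply is_RInt_gen_swap, Hl.
Qed.

Lemma punctured_continuous_cnorm f x d :
  punctured_continuous f x d -> punctured_continuous (cnorm f) x d.
Proof. intros H t Htx Ht; apply continuous_cnorm, H; assumption. Qed.

Lemma list_isolated (s : list R) x : exists d, 0 < d /\ forall y, In y s -> y <> x -> d < Rabs (y - x).
Proof.
  induction s as [|a s [d [Hd H]]].
  - exists 1; split; [lra | intros y []].
  - destruct (Req_dec a x) as [->|Ha].
    + exists d; split; [assumption|]; intros y [<-|Hy] Hyx; [now elim Hyx | auto].
    + assert (Hax : 0 < Rabs (a - x)) by (apply Rabs_pos_lt; lra).
      exists (Rmin d (Rabs (a - x) / 2)); split; [apply Rmin_pos; lra|].
      pose proof (Rmin_l d (Rabs (a - x) / 2)); pose proof (Rmin_r d (Rabs (a - x) / 2)).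
      intros y [<-|Hy] Hyx; [lra | specialize (H y Hy Hyx); lra].
Qed.

Lemma PC0_local f : PC0 f -> forall x, exists d, 0 < d /\
  punctured_continuous f x d /\ small_RInt_at (cnorm f) x.
Proof.
  intros [Hdisc Himp] x.
  destruct (Hdisc (x - 1) (x + 1)) as [s Hs], (list_isolated s x) as [d0 [Hd0 Hsep]].
  set (d := Rmin d0 1 / 2); pose proof (Rmin_l d0 1); pose proof (Rmin_r d0 1).
  assert (Hd : 0 < d) by (unfold d; pose proof (Rmin_pos d0 1 Hd0 Rlt_0_1); lra).
  assert (Hc : punctured_continuous f x d).
  { intros t Htx Ht; apply NNPP; intros Hnc.
    apply Rabs_le_between in Ht as Ht'.
    specialize (Hsep t (Hs t ltac:(unfold d in *; lra) Hnc) Htx); unfold d in *; lra. }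
  exists d; split; [exact Hd|]; split; [exact Hc|].
  destruct (classic (continuous f x)) as [Hx|Hx].
  - apply (small_RInt_at_continuous _ x d Hd);
      [apply continuous_cnorm, Hx | apply punctured_continuous_cnorm, Hc].
  - destruct (Himp x Hx) as [d' [_ [HR HL]]].
    exact (small_RInt_at_of_ex_RInt_gen _ x d _ _ Hd (punctured_continuous_cnorm _ _ _ Hc) HR HL).
Qed.

Lemma PC0_of_local f :
  (forall a b, exists s : list R, forall x, a <= x <= b -> ~ continuous f x -> In x s) ->
  (forall x, exists d, 0 < d /\ punctured_continuous f x d /\ small_RInt_at (cnorm f) x) ->
  PC0 f.
Proof.
  intros Hdisc Hloc; split; [exact Hdisc|]; intros x _.
  destruct (Hloc x) as [d [Hd [Hc Hs]]]; exists d; split; [exact Hd|].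
  apply (ex_RInt_gen_of_small_RInt_at (cnorm f));
    [exact Hd | intros; apply Cmod_ge_0 | apply punctured_continuous_cnorm, Hc | exact Hs].
Qed.

Lemma PC0_continuous f : (forall t, continuous f t) -> PC0 f.
Proof.
  intros H; split; [intros a b; exists nil; intros x _ Hx | intros x Hx]; now elim Hx.
Qed.

Lemma PC0_plus f g : PC0 f -> PC0 g -> PC0 (fun t => f t + g t)%C.
Proof.
  intros Hf Hg; apply PC0_of_local.
  - intros a b; destruct (proj1 Hf a b) as [sf Hsf], (proj1 Hg a b) as [sg Hsg].
    exists (sf ++ sg); intros x Hx Hc; apply in_or_app.
    destruct (classic (continuous f x)) as [Cf|Cf]; [|left; apply Hsf; assumption].
    destruct (classic (continuous g x)) as [Cg|Cg]; [|right; apply Hsg; assumption].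
    exfalso; apply Hc, continuous_Cplus; assumption.
  - intros x.
    destruct (PC0_local f Hf x) as [d1 [Hd1 [Cf Sf]]], (PC0_local g Hg x) as [d2 [Hd2 [Cg Sg]]].
    set (d := Rmin d1 d2); assert (Hd : 0 < d) by (apply Rmin_pos; assumption).
    apply (punctured_continuous_mono _ _ _ d) in Cf; [|apply Rmin_l].
    apply (punctured_continuous_mono _ _ _ d) in Cg; [|apply Rmin_r].
    apply punctured_continuous_cnorm in Cf as Nf; apply punctured_continuous_cnorm in Cg as Ng.
    exists d; split; [exact Hd|]; split.
    + intros t Htx Ht; apply continuous_Cplus; [apply Cf | apply Cg]; assumption.
    + apply (small_RInt_at_le _ (fun t => cnorm f t + cnorm g t) x d Hd).
      * intros t Htx Ht; apply continuous_cnorm, continuous_Cplus; [apply Cf | apply Cg]; assumption.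
      * intros t Htx Ht; apply (continuous_plus (V := R_NormedModule)); [apply Nf | apply Ng]; assumption.
      * intros t _ _; apply Cmod_triangle.
      * apply (small_RInt_at_plus _ _ x d); assumption.
Qed.

Lemma PC0_mult_continuous g f : (forall t, continuous g t) -> PC0 f -> PC0 (fun t => g t * f t)%C.
Proof.
  intros Hg Hf; apply PC0_of_local.
  - intros a b; destruct (proj1 Hf a b) as [sf Hsf]; exists sf; intros x Hx Hc.
    apply Hsf; [assumption|]; intros Cf; apply Hc, continuous_Cmult; auto.
  - intros x; destruct (PC0_local f Hf x) as [d1 [Hd1 [Cf Sf]]].
    destruct (continuity_ab_maj (cnorm g) (x - 1) (x + 1)) as [xM [HM _]]; [lra| |].
    { intros c _; apply continuity_pt_filterlim, continuous_cnorm, Hg. }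
    set (d := Rmin d1 1); assert (Hd : 0 < d) by (apply Rmin_pos; lra).
    assert (Hd_le_1 : d <= 1) by apply Rmin_r.
    apply (punctured_continuous_mono _ _ _ d) in Cf; [|apply Rmin_l].
    apply punctured_continuous_cnorm in Cf as Nf.
    exists d; split; [exact Hd|]; split.
    + intros t Htx Ht; apply continuous_Cmult; [apply Hg | apply Cf]; assumption.
    + apply (small_RInt_at_le _ (fun t => cnorm g xM * cnorm f t) x d Hd).
      * intros t Htx Ht; apply continuous_cnorm, continuous_Cmult; [apply Hg | apply Cf]; assumption.
      * intros t Htx Ht; apply (continuous_mult (fun _ => cnorm g xM) (cnorm f));
          [apply continuous_const | apply Nf]; assumption.
      * intros t _ Ht; unfold cnorm at 1; rewrite Cmod_mult.
        apply Rmult_le_compat_r; [apply Cmod_ge_0 | apply HM; apply Rabs_le_between in Ht; lra].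
      * apply (small_RInt_at_scal _ _ x d); [apply cnorm_ge_0 | assumption..].
Qed.

(** * The space C_p^2 and the operators L and D^k *)

Definition is_C2 (g : R -> C) : Prop :=
  exists g1 g2, is_cderive g g1 /\ is_cderive g1 g2 /\ forall t, continuous g2 t.

Lemma is_C2_const (c : C) : is_C2 (fun _ => c).
Proof.
  exists (fun _ => 0%C), (fun _ => 0%C).
  split; [|split]; [apply is_cderive_const.. | intros; apply continuous_const].
Qed.

Lemma is_C2_RtoC : is_C2 RtoC.
Proof.
  exists (fun _ => 1%C), (fun _ => 0%C); split; [|split];
    [apply is_cderive_RtoC | apply is_cderive_const | intros; apply continuous_const].
Qed.

Lemma is_C2_ebl k : is_C2 (ebl k).
Proof.
  exists (fun x => Ci * k * ebl k x)%C, (fun x => Ci * k * (Ci * k * ebl k x))%C.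
  split; [apply is_cderive_ebl|]; split; [apply is_cderive_scal, is_cderive_ebl|].
  intros t; apply continuous_Cmult; [apply continuous_const|].
  apply continuous_Cmult; [apply continuous_const | eapply is_cderive_continuous, is_cderive_ebl].
Qed.

Lemma Cp2_iff f : Cp 2 f <-> cdiff f /\ cdiff (cD f) /\ PC0 (cD (cD f)).
Proof. simpl; tauto. Qed.

Lemma Cp2_cdiff f : Cp 2 f -> cdiff f /\ cdiff (cD f).
Proof. intros H; apply Cp2_iff in H; destruct H as [H1 [H2 _]]; split; assumption. Qed.

Lemma Cp2_of_C2 g : is_C2 g -> Cp 2 g.
Proof.
  intros [g1 [g2 [H1 [H2 Hc]]]]; apply Cp2_iff.
  rewrite (is_cderive_cD _ _ H1), (is_cderive_cD _ _ H2).
  split; [|split]; [eapply is_cderive_cdiff; eassumption.. | apply PC0_continuous, Hc].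
Qed.

Lemma Cp2_plus f g : Cp 2 f -> Cp 2 g -> Cp 2 (fun t => f t + g t)%C.
Proof.
  rewrite !Cp2_iff; intros [F1 [F2 F3]] [G1 [G2 G3]].
  assert (D1 := is_cderive_plus _ _ _ _ (cdiff_is_cderive _ F1) (cdiff_is_cderive _ G1)).
  assert (D2 := is_cderive_plus _ _ _ _ (cdiff_is_cderive _ F2) (cdiff_is_cderive _ G2)).
  split; [eapply is_cderive_cdiff; eassumption|]; rewrite (is_cderive_cD _ _ D1).
  split; [eapply is_cderive_cdiff; eassumption|]; rewrite (is_cderive_cD _ _ D2).
  apply PC0_plus; assumption.
Qed.

Lemma Cp2_mult g f : is_C2 g -> Cp 2 f -> Cp 2 (fun t => g t * f t)%C.
Proof.
  intros [g1 [g2 [Hg1 [Hg2 Hc]]]]; rewrite !Cp2_iff; intros [F1 [F2 F3]].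
  assert (Q1 := cdiff_is_cderive _ F1); assert (Q2 := cdiff_is_cderive _ F2).
  assert (D1 := is_cderive_mult _ _ _ _ Hg1 Q1).
  assert (D2 := is_cderive_plus _ _ _ _ (is_cderive_mult _ _ _ _ Hg2 Q1)
                                        (is_cderive_mult _ _ _ _ Hg1 Q2)).
  split; [eapply is_cderive_cdiff; eassumption|]; rewrite (is_cderive_cD _ _ D1).
  split; [eapply is_cderive_cdiff; eassumption|]; rewrite (is_cderive_cD _ _ D2).
  replace (fun x => g2 x * f x + g1 x * cD f x + (g1 x * cD f x + g x * cD (cD f) x))%C
    with (fun x => (g2 x * f x + g1 x * cD f x + g1 x * cD f x) + g x * cD (cD f) x)%C
    by (apply functional_extensionality; intros; ring).
  apply PC0_plus.
  - apply PC0_continuous; intros t.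
    assert (Cf := cdiff_continuous f t F1); assert (Cf' := cdiff_continuous (cD f) t F2).
    assert (C1 := is_cderive_continuous g1 g2 t Hg2).
    apply continuous_Cplus; [apply continuous_Cplus|]; apply continuous_Cmult; auto.
  - apply PC0_mult_continuous; [intros t; eapply is_cderive_continuous|]; eassumption.
Qed.

Lemma Cp2_scal (c : C) f : Cp 2 f -> Cp 2 (fun t => c * f t)%C.
Proof. apply Cp2_mult, is_C2_const. Qed.

Definition periodic (gamma : R) (f : R -> C) : Prop := forall x, f (x + gamma) = f x.

Lemma cD_periodic gamma f : periodic gamma f -> periodic gamma (cD f).
Proof.
  intros H x; rewrite <- cD_shift; f_equal; apply functional_extensionality; intros; apply H.
Qed.

Definition is_solution W V lam (psi : R -> C) : Prop :=
  cdiff psi /\ cdiff (cD psi) /\ forall x, Lop W V psi x = (RtoC lam * psi x)%C.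

Lemma Eset_is_solution W V lam psi : Eset W V lam psi -> is_solution W V lam psi.
Proof. intros [H1 H2]; destruct (Cp2_cdiff _ H1); split; [|split]; assumption. Qed.

Lemma Eset_ext W V lam f g : (forall t, f t = g t) -> Eset W V lam f -> Eset W V lam g.
Proof. intros E; replace g with f by (apply functional_extensionality; assumption); auto. Qed.

Lemma is_cderive_lin (a b : C) f g : cdiff f -> cdiff g ->
  is_cderive (fun t => a * f t + b * g t)%C (fun t => a * cD f t + b * cD g t)%C.
Proof.
  intros F G; apply is_cderive_plus; apply is_cderive_scal, cdiff_is_cderive; assumption.
Qed.

Lemma cD_lin (a b : C) f g x : cdiff f -> cdiff g ->
  cD (fun t => a * f t + b * g t)%C x = (a * cD f x + b * cD g x)%C.
Proof. intros F G; rewrite (is_cderive_cD _ _ (is_cderive_lin a b f g F G)); reflexivity. Qed.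

Lemma Lop_lin W V (a b : C) f g x : cdiff f -> cdiff (cD f) -> cdiff g -> cdiff (cD g) ->
  Lop W V (fun t => a * f t + b * g t)%C x = (a * Lop W V f x + b * Lop W V g x)%C.
Proof.
  intros F1 F2 G1 G2; unfold Lop.
  rewrite (is_cderive_cD _ _ (is_cderive_lin a b f g F1 G1)).
  rewrite (is_cderive_cD _ _ (is_cderive_lin a b _ _ F2 G2)); ring.
Qed.

Lemma is_solution_lin W V lam (a b : C) f g : is_solution W V lam f -> is_solution W V lam g ->
  is_solution W V lam (fun t => a * f t + b * g t)%C.
Proof.
  intros [F1 [F2 F3]] [G1 [G2 G3]].
  assert (D1 := is_cderive_lin a b f g F1 G1).
  split; [eapply is_cderive_cdiff; eassumption|].
  split; [rewrite (is_cderive_cD _ _ D1); eapply is_cderive_cdiff, is_cderive_lin; assumption|].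
  intros x; rewrite Lop_lin, F3, G3 by assumption; ring.
Qed.

Lemma Eset_lin W V lam (a b : C) f g : Eset W V lam f -> Eset W V lam g ->
  Eset W V lam (fun t => a * f t + b * g t)%C.
Proof.
  intros Hf Hg; split.
  - apply Cp2_plus; apply Cp2_scal; [apply Hf | apply Hg].
  - apply is_solution_lin; apply Eset_is_solution; assumption.
Qed.

Lemma Eset_zero W V lam : Eset W V lam (fun _ => 0%C).
Proof.
  split; [apply Cp2_of_C2, is_C2_const|].
  intros x; unfold Lop; rewrite !(is_cderive_cD _ _ (is_cderive_const 0%C)); ring.
Qed.

Lemma is_solution_shift W V lam gamma f : periodic gamma W -> periodic gamma V ->
  is_solution W V lam f -> is_solution W V lam (fun t => f (t + gamma)).
Proof.
  intros HW HV [F1 [F2 F3]].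
  assert (D1 := is_cderive_shift _ _ gamma (cdiff_is_cderive _ F1)).
  assert (D2 := is_cderive_shift _ _ gamma (cdiff_is_cderive _ F2)).
  split; [eapply is_cderive_cdiff; eassumption|].
  rewrite (is_cderive_cD _ _ D1); split; [eapply is_cderive_cdiff; eassumption|].
  intros x; unfold Lop; rewrite (is_cderive_cD _ _ D1), (is_cderive_cD _ _ D2).
  rewrite <- (HW x), <- (HV x); apply F3.
Qed.

Lemma Lop_ebl W V k q x : cdiff q -> cdiff (cD q) ->
  Lop W V (fun t => ebl k t * q t)%C x = (ebl k x * Dk W V k q x)%C.
Proof.
  intros Q1 Q2.
  assert (E1 := is_cderive_ebl k); assert (E2 := is_cderive_scal (Ci * k) _ _ E1).
  assert (D1 := is_cderive_mult _ _ _ _ E1 (cdiff_is_cderive _ Q1)).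
  assert (D2 := is_cderive_plus _ _ _ _ (is_cderive_mult _ _ _ _ E2 (cdiff_is_cderive _ Q1))
                                        (is_cderive_mult _ _ _ _ E1 (cdiff_is_cderive _ Q2))).
  unfold Lop, Dk; rewrite (is_cderive_cD _ _ D1), (is_cderive_cD _ _ D2).
  replace (Ci * k * (Ci * k * ebl k x))%C with (- (k * k) * ebl k x)%C.
  - ring.
  - replace Ci with (0, 1)%R by reflexivity; apply injective_projections; simpl; ring.
Qed.

Lemma Dk_xmul W V k q1 q2 x : cdiff q1 -> cdiff (cD q1) -> cdiff q2 -> cdiff (cD q2) ->
  Dk W V k (fun t => q1 t + RtoC t * q2 t)%C x =
  (Dk W V k q1 x + RtoC x * Dk W V k q2 x + (W x - 2 * Ci * k) * q2 x - 2 * cD q2 x)%C.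
Proof.
  intros A1 A2 B1 B2.
  assert (D1 := is_cderive_plus _ _ _ _ (cdiff_is_cderive _ A1)
                  (is_cderive_mult _ _ _ _ is_cderive_RtoC (cdiff_is_cderive _ B1))).
  assert (D2 := is_cderive_plus _ _ _ _ (cdiff_is_cderive _ A2)
                  (is_cderive_plus _ _ _ _
                     (is_cderive_mult _ _ _ _ (is_cderive_const 1%C) (cdiff_is_cderive _ B1))
                     (is_cderive_mult _ _ _ _ is_cderive_RtoC (cdiff_is_cderive _ B2)))).
  unfold Dk; rewrite (is_cderive_cD _ _ D1), (is_cderive_cD _ _ D2); ring.
Qed.

Lemma Dk_periodic W V gamma k q : periodic gamma W -> periodic gamma V -> periodic gamma q ->
  periodic gamma (Dk W V k q).
Proof.
  intros HW HV Hq x; unfold Dk.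
  rewrite (cD_periodic gamma (cD q)), (cD_periodic gamma q), HW, HV, Hq by
    (try apply cD_periodic; assumption).
  reflexivity.
Qed.

(** * Uniqueness for the Cauchy problem *)

Definition cdot (a b : C) : R := fst a * fst b + snd a * snd b.

Lemma cdot_Cmod a b : Rabs (cdot a b) <= Cmod a * Cmod b.
Proof.
  rewrite <- (Rabs_right (Cmod a * Cmod b)) by (apply Rle_ge, Rmult_le_pos; apply Cmod_ge_0).
  apply Rsqr_le_abs_0; unfold Rsqr, cdot.
  replace (Cmod a * Cmod b * (Cmod a * Cmod b)) with (Cmod a ^ 2 * Cmod b ^ 2) by ring.
  rewrite !Cmod2_alt; unfold Re, Im.
  pose proof (Rle_0_sqr (fst a * snd b - snd a * fst b)); unfold Rsqr in *; nra.
Qed.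

Lemma cdot_self a : cdot a a = Cmod a ^ 2.
Proof. rewrite Cmod2_alt; unfold cdot, Re, Im; ring. Qed.

Definition energy (psi : R -> C) (t : R) : R := cdot (psi t) (psi t) + cdot (cD psi t) (cD psi t).

Lemma energy_ge_0 psi t : 0 <= energy psi t.
Proof.
  unfold energy; rewrite !cdot_self.
  pose proof (pow2_ge_0 (Cmod (psi t))); pose proof (pow2_ge_0 (Cmod (cD psi t))); lra.
Qed.

Definition denergy (psi : R -> C) (t : R) : R :=
  2 * (cdot (psi t) (cD psi t) + cdot (cD psi t) (cD (cD psi) t)).

Lemma is_derive_energy psi t : cdiff psi -> cdiff (cD psi) -> is_derive (energy psi) t (denergy psi t).
Proof.
  intros H1 H2; destruct (cdiff_is_cderive _ H1 t) as [A1 A2], (cdiff_is_cderive _ H2 t) as [B1 B2].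
  unfold energy, denergy, cdot; eapply is_derive_eq.
  - apply (is_derive_plus (V := R_NormedModule));
      (apply (is_derive_plus (V := R_NormedModule)); apply is_derive_Rmult; eassumption).
  - unfold plus; simpl; ring.
Qed.

(** The rate of growth of [energy] permitted by [psi'' = W psi' + (V - lam) psi]. *)
Definition growth (W V : R -> C) (lam : R) (t : R) : R :=
  1 + Rabs lam + (2 * cnorm W t + cnorm V t).

Lemma is_solution_cD2 W V lam psi t : is_solution W V lam psi ->
  cD (cD psi) t = (W t * cD psi t + (V t - RtoC lam) * psi t)%C.
Proof.
  intros [_ [_ HL]]; specialize (HL t); unfold Lop in HL.
  replace (cD (cD psi) t) with
    (- (- cD (cD psi) t + W t * cD psi t + V t * psi t) + W t * cD psi t + V t * psi t)%C by ring.
  rewrite HL; ring.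
Qed.

Lemma energy_derive_bound W V lam psi t : is_solution W V lam psi ->
  Rabs (denergy psi t) <= growth W V lam t * energy psi t.
Proof.
  intros Hsol; assert (Hpp := is_solution_cD2 W V lam psi t Hsol).
  assert (Hsplit : cdot (cD psi t) (cD (cD psi) t)
                   = cdot (cD psi t) (W t * cD psi t)%C + cdot (cD psi t) ((V t - RtoC lam) * psi t)%C)
    by (rewrite Hpp; unfold cdot; simpl; ring).
  assert (B1 := cdot_Cmod (psi t) (cD psi t)).
  assert (B2 := cdot_Cmod (cD psi t) (W t * cD psi t)%C).
  assert (B3 := cdot_Cmod (cD psi t) ((V t - RtoC lam) * psi t)%C).
  assert (Hvl : Cmod (V t - RtoC lam)%C <= cnorm V t + Rabs lam).
  { unfold Cminus, cnorm; eapply Rle_trans; [apply Cmod_triangle|]; rewrite Cmod_opp, Cmod_R; lra. }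
  rewrite Cmod_mult in B2, B3; unfold denergy; rewrite Hsplit; unfold energy, growth; rewrite !cdot_self.
  fold (cnorm W t) in B2; set (a := Cmod (psi t)) in *; set (b := Cmod (cD psi t)) in *.
  set (c := Cmod (V t - RtoC lam)%C) in *; set (w := cnorm W t) in *.
  set (v := cnorm V t + Rabs lam) in *.
  assert (0 <= a) by apply Cmod_ge_0; assert (0 <= b) by apply Cmod_ge_0.
  assert (0 <= w) by apply Cmod_ge_0; assert (0 <= c) by apply Cmod_ge_0.
  assert (Hab : 2 * (a * b) <= a ^ 2 + b ^ 2) by (pose proof (pow2_ge_0 (a - b)); nra).
  assert (Hw : w * (b * b) <= w * (a ^ 2 + b ^ 2)) by (apply Rmult_le_compat_l; nra).
  assert (Hc : c * (b * a) <= v * (b * a)) by (apply Rmult_le_compat_r; nra).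
  assert (Hv : 2 * (v * (b * a)) <= v * (a ^ 2 + b ^ 2))
    by (replace (2 * (v * (b * a))) with (v * (2 * (a * b))) by ring; apply Rmult_le_compat_l; lra).
  apply Rabs_le_between in B1, B2, B3; apply Rabs_le.
  replace ((1 + Rabs lam + (2 * w + cnorm V t)) * (a ^ 2 + b ^ 2))
    with ((a ^ 2 + b ^ 2) + 2 * (w * (a ^ 2 + b ^ 2)) + v * (a ^ 2 + b ^ 2)) by (unfold v; ring).
  split; lra.
Qed.

Lemma is_derive_RInt_open (C : R -> R) lo hi s t : lo < s < hi -> lo < t < hi ->
  (forall u, lo < u < hi -> continuous C u) -> is_derive (fun b => RInt C s b) t (C t).
Proof.
  intros Hs Ht HC; apply (is_derive_RInt C (fun b => RInt C s b) s t); [|apply HC; assumption].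
  assert (Hp : 0 < Rmin (t - lo) (hi - t)) by (apply Rmin_pos; lra).
  exists (mkposreal _ Hp); intros b Hb; change (Rabs (b - t) < Rmin (t - lo) (hi - t)) in Hb.
  pose proof (Rmin_l (t - lo) (hi - t)); pose proof (Rmin_r (t - lo) (hi - t)).
  apply Rabs_lt_between in Hb.
  apply (RInt_correct C s b), (ex_RInt_continuous (V := R_CompleteNormedModule)).
  intros u Hu; apply HC; unfold Rmin, Rmax in Hu; destruct (Rle_dec s b); lra.
Qed.

Lemma le_RInt_of_derive_le (E dE C : R -> R) lo hi s b M : lo < s -> s <= b -> b < hi ->
  (forall t, is_derive E t (dE t)) -> (forall t, lo < t < hi -> continuous C t) ->
  (forall t, s <= t <= b -> dE t <= C t * E t /\ 0 <= C t /\ E t <= M) ->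
  E b <= E s + M * RInt C s b.
Proof.
  intros Hs Hsb Hb HE HC Hbd.
  set (H := fun t => E t - M * RInt C s t).
  assert (HD : forall t, s <= t <= b -> is_derive H t (dE t - M * C t)).
  { intros t Ht; apply (is_derive_minus (V := R_NormedModule)); [apply HE|].
    apply (is_derive_scal (fun b => RInt C s b)), (is_derive_RInt_open C lo hi); lra || assumption. }
  destruct (MVT_gen H s b (fun t => dE t - M * C t)) as [c [Hc Hmvt]];
    rewrite Rmin_left, Rmax_right in * by assumption.
  - intros t Ht; apply HD; lra.
  - intros t Ht; apply continuity_pt_filterlim, (ex_derive_continuous (V := R_NormedModule)).
    eexists; apply HD; assumption.
  - assert (Hneg : dE c - M * C c <= 0) by (destruct (Hbd c Hc) as [H1 [H2 H3]]; nra).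
    unfold H in Hmvt; rewrite RInt_point in Hmvt; unfold zero in Hmvt; simpl in Hmvt.
    assert ((dE c - M * C c) * (b - s) <= 0) by (apply Rmult_le_0_r; lra).
    lra.
Qed.

Lemma gronwall_right (E dE C : R -> R) z del : 0 < del ->
  (forall t, is_derive E t (dE t)) -> (forall t, 0 <= E t) -> E z = 0 ->
  (forall t, z < t < z + del -> dE t <= C t * E t /\ 0 <= C t /\ continuous C t) ->
  (forall s t, z < s -> s <= t -> t < z + del -> RInt C s t <= 1 / 2) ->
  forall y, z <= y < z + del -> E y = 0.
Proof.
  intros Hdel HE Hpos Hz Hbd Hint y Hy.
  assert (HcE : forall t, continuous E t)
    by (intros t; apply (ex_derive_continuous (V := R_NormedModule)); eexists; apply HE).
  destruct (continuity_ab_maj E z y) as [xM [HM HxM]]; [lra | intros; apply continuity_pt_filterlim, HcE|].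
  enough (E xM <= 0) by (pose proof (HM y ltac:(lra)); pose proof (Hpos y); lra).
  apply Rnot_lt_le; intros HMpos.
  assert (HxMz : z < xM) by (destruct (Req_dec xM z) as [->|]; lra).
  assert (Hq : 0 < E xM / 4) by lra.
  destruct (proj1 (filterlim_locally _ _) (HcE z) (mkposreal _ Hq)) as [eta Heta].
  set (s := z + Rmin eta (xM - z) / 2).
  pose proof (Rmin_l eta (xM - z)); pose proof (Rmin_r eta (xM - z)).
  assert (0 < Rmin eta (xM - z)) by (apply Rmin_pos; [apply cond_pos | lra]).
  assert (Es : E s < E xM / 4).
  { assert (Hb : ball (E z) (E xM / 4) (E s))
      by (apply Heta; change (Rabs (s - z) < eta); rewrite Rabs_right; unfold s; lra).
    change (Rabs (E s - E z) < E xM / 4) in Hb; rewrite Hz in Hb; apply Rabs_lt_between in Hb; lra. }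
  assert (Hstep : E xM <= E s + E xM * RInt C s xM).
  { apply (le_RInt_of_derive_le E dE C z (z + del));
      [unfold s; lra.. | exact HE | intros t Ht; apply Hbd; lra |].
    intros t Ht; destruct (Hbd t) as [Hdt [HCt _]]; [unfold s in Ht; lra|].
    split; [|split]; [assumption.. | apply HM; unfold s in Ht; lra]. }
  assert (RInt C s xM <= 1 / 2) by (apply Hint; unfold s; lra).
  assert (E xM * RInt C s xM <= E xM * (1 / 2)) by (apply Rmult_le_compat_l; lra).
  lra.
Qed.

Lemma RInt_comp_opp (f : R -> R) a b : ex_RInt f (- a) (- b) ->
  RInt (fun t => f (- t)) a b = RInt f (- b) (- a).
Proof.
  intros Hex; apply is_RInt_unique; rewrite <- (opp_RInt_swap f) by exact Hex.
  apply (is_RInt_ext (V := R_CompleteNormedModule) (fun y => opp (opp (f (- y)))));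
    [intros; apply opp_opp|].
  apply (is_RInt_opp (V := R_CompleteNormedModule)), (is_RInt_comp_opp (V := R_CompleteNormedModule)).
  exact (RInt_correct f _ _ Hex).
Qed.

Lemma gronwall_left (E dE C : R -> R) z del : 0 < del ->
  (forall t, is_derive E t (dE t)) -> (forall t, 0 <= E t) -> E z = 0 ->
  (forall t, z - del < t < z -> - (C t * E t) <= dE t /\ 0 <= C t /\ continuous C t) ->
  (forall s t, z - del < s -> s <= t -> t < z -> RInt C s t <= 1 / 2) ->
  forall y, z - del < y <= z -> E y = 0.
Proof.
  intros Hdel HE Hpos Hz Hbd Hint y Hy.
  assert (Hopp : forall t, is_derive Ropp t (-1)) by (intros t; auto_derive; [exact I | ring]).
  replace y with (- - y) by ring.
  apply (gronwall_right (fun t => E (- t)) (fun t => - dE (- t)) (fun t => C (- t)) (- z) del);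
    [exact Hdel | | intros; apply Hpos | rewrite Ropp_involutive; exact Hz | | | lra].
  - intros t; eapply is_derive_eq; [apply (is_derive_comp E Ropp); [apply HE | apply Hopp]|].
    change (-1 * dE (- t) = - dE (- t)); ring.
  - intros t Ht; destruct (Hbd (- t)) as [H1 [H2 H3]]; [lra|]; split; [lra | split; [exact H2|]].
    apply (continuous_comp Ropp C); [|exact H3].
    apply (ex_derive_continuous (V := R_NormedModule)); eexists; apply Hopp.
  - intros s t Hs Hst Ht; rewrite RInt_comp_opp; [apply Hint; lra|].
    apply (ex_RInt_continuous (V := R_CompleteNormedModule)); intros u Hu.
    apply Hbd; unfold Rmin, Rmax in Hu; destruct (Rle_dec (- s) (- t)); lra.
Qed.

Lemma small_RInt_at_growth W V lam z : PC0 W -> PC0 V -> exists d, 0 < d /\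
  punctured_continuous (growth W V lam) z d /\ small_RInt_at (growth W V lam) z.
Proof.
  intros HW HV.
  destruct (PC0_local W HW z) as [d1 [Hd1 [CW SW]]], (PC0_local V HV z) as [d2 [Hd2 [CV SV]]].
  set (d := Rmin d1 d2); assert (Hd : 0 < d) by (apply Rmin_pos; assumption).
  apply (punctured_continuous_mono _ _ _ d) in CW; [|apply Rmin_l].
  apply (punctured_continuous_mono _ _ _ d) in CV; [|apply Rmin_r].
  apply punctured_continuous_cnorm in CW, CV.
  assert (CW2 : punctured_continuous (fun t => 2 * cnorm W t) z d)
    by (intros t Htx Ht; apply (continuous_scal_r 2 (cnorm W)), CW; assumption).
  assert (Csum : punctured_continuous (fun t => 2 * cnorm W t + cnorm V t) z d)
    by (intros t Htx Ht; apply (continuous_plus (V := R_NormedModule));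
        [apply CW2 | apply CV]; assumption).
  assert (Cconst : punctured_continuous (fun _ => 1 + Rabs lam) z d)
    by (intros t _ _; apply continuous_const).
  exists d; split; [exact Hd|]; split.
  - intros t Htx Ht; apply (continuous_plus (V := R_NormedModule));
      [apply Cconst | apply Csum]; assumption.
  - apply (small_RInt_at_plus _ _ z d Hd Cconst Csum).
    + apply (small_RInt_at_continuous _ z d Hd (continuous_const _ _) Cconst).
    + apply (small_RInt_at_plus _ _ z d Hd CW2 CV); [|assumption].
      apply (small_RInt_at_scal 2 _ z d); [lra | assumption..].
Qed.

Lemma growth_ge_0 W V lam t : 0 <= growth W V lam t.
Proof.
  unfold growth; pose proof (Rabs_pos lam); pose proof (cnorm_ge_0 W t); pose proof (cnorm_ge_0 V t).
  lra.
Qed.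

Lemma energy_vanishes_near W V lam psi z : PC0 W -> PC0 V -> is_solution W V lam psi ->
  energy psi z = 0 -> exists del, 0 < del /\ forall t, Rabs (t - z) < del -> energy psi t = 0.
Proof.
  intros HW HV Hsol Hz; assert (Hsol' := Hsol); destruct Hsol' as [S1 [S2 _]].
  destruct (small_RInt_at_growth W V lam z HW HV) as [d [Hd [Hc Hs]]].
  destruct (Hs (1 / 2)) as [del0 [Hdel0 Hint]]; [lra|].
  set (del := Rmin d del0).
  assert (Hdd : del <= d) by apply Rmin_l; assert (Hdd0 : del <= del0) by apply Rmin_r.
  assert (Hdel : 0 < del) by (apply Rmin_pos; assumption).
  assert (HE : forall t, is_derive (energy psi) t (denergy psi t))
    by (intros; apply is_derive_energy; assumption).
  assert (Hb : forall t, Rabs (denergy psi t) <= growth W V lam t * energy psi t)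
    by (intros; apply energy_derive_bound; assumption).
  assert (Hgc : forall t, t <> z -> Rabs (t - z) < del ->
                0 <= growth W V lam t /\ continuous (growth W V lam) t)
    by (intros t Htx Ht; split; [apply growth_ge_0 | apply Hc; [assumption | lra]]).
  exists del; split; [exact Hdel|]; intros t Ht; apply Rabs_lt_between in Ht.
  destruct (Rle_dec z t).
  - apply (gronwall_right _ (denergy psi) (growth W V lam) z del Hdel HE (energy_ge_0 psi) Hz); [| |lra].
    + intros u Hu; destruct (Hgc u) as [G1 G2]; [lra | apply Rabs_lt_between; lra|].
      specialize (Hb u); apply Rabs_le_between in Hb; repeat split; [lra | assumption..].
    + intros s u Hs1 Hsu Hu; apply Hint; [assumption | unfold same_side; lra].
  - apply (gronwall_left _ (denergy psi) (growth W V lam) z del Hdel HE (energy_ge_0 psi) Hz); [| |lra].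
    + intros u Hu; destruct (Hgc u) as [G1 G2]; [lra | apply Rabs_lt_between; lra|].
      specialize (Hb u); apply Rabs_le_between in Hb; repeat split; [lra | assumption..].
    + intros s u Hs1 Hsu Hu; apply Hint; [assumption | unfold same_side; lra].
Qed.

Lemma continuous_neq_0_near (E : R -> R) m : continuous E m -> E m <> 0 ->
  exists eta, 0 < eta /\ forall t, Rabs (t - m) < eta -> E t <> 0.
Proof.
  intros HC Hm; assert (Hp : 0 < Rabs (E m)) by (apply Rabs_pos_lt; assumption).
  destruct (proj1 (filterlim_locally _ _) HC (mkposreal _ Hp)) as [eta Heta].
  exists eta; split; [apply cond_pos|]; intros t Ht Et.
  specialize (Heta t Ht); change (Rabs (E t - E m) < Rabs (E m)) in Heta.
  rewrite Et, Rminus_0_l, Rabs_Ropp in Heta; lra.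
Qed.

Lemma zero_propagates_right (E : R -> R) x0 : (forall t, continuous E t) ->
  (forall z, E z = 0 -> exists del, 0 < del /\ forall t, Rabs (t - z) < del -> E t = 0) ->
  E x0 = 0 -> forall y, x0 <= y -> E y = 0.
Proof.
  intros HC Hopen H0 y Hy; apply NNPP; intros Hny.
  set (A := fun t => x0 <= t <= y /\ E t = 0).
  destruct (completeness A) as [m [Hub Hlub]];
    [exists y; intros t [Ht _]; lra | exists x0; split; [lra | exact H0]|].
  assert (Hxm : x0 <= m <= y)
    by (split; [apply Hub; split; [lra | exact H0] | apply Hlub; intros t [Ht _]; lra]).
  assert (Hm : E m = 0).
  { apply NNPP; intros Hnm; destruct (continuous_neq_0_near E m (HC m) Hnm) as [eta [Heta Hne]].
    assert (Hb : is_upper_bound A (m - eta / 2)).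
    { intros t [Ht Et]; apply Rnot_lt_le; intros Hlt; apply (Hne t); [|exact Et].
      assert (t <= m) by (apply Hub; split; assumption); apply Rabs_lt_between; lra. }
    specialize (Hlub _ Hb); lra. }
  destruct (Hopen m Hm) as [del [Hdel Hz]].
  assert (Hmy : m < y) by (destruct (Req_dec m y) as [<-|]; [contradiction | lra]).
  set (t := Rmin (m + del / 2) y).
  assert (Ht1 : t <= m + del / 2) by apply Rmin_l; assert (Ht2 : t <= y) by apply Rmin_r.
  assert (Htm : m < t) by (unfold t; apply Rmin_case; lra).
  assert (At : A t) by (split; [lra | apply Hz; apply Rabs_lt_between; lra]).
  specialize (Hub t At); lra.
Qed.

Lemma zero_propagates (E : R -> R) x0 : (forall t, continuous E t) ->
  (forall z, E z = 0 -> exists del, 0 < del /\ forall t, Rabs (t - z) < del -> E t = 0) ->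
  E x0 = 0 -> forall y, E y = 0.
Proof.
  intros HC Hopen H0 y; destruct (Rle_dec x0 y); [apply (zero_propagates_right E x0); assumption|].
  replace y with (- - y) by ring.
  apply (zero_propagates_right (fun t => E (- t)) (- x0)); [| |rewrite Ropp_involutive; exact H0 | lra].
  - intros t; apply (continuous_comp Ropp E); [|apply HC].
    apply (ex_derive_continuous (V := R_NormedModule)); auto_derive; exact I.
  - intros z Hz; destruct (Hopen (- z) Hz) as [del [Hdel Hd]]; exists del; split; [exact Hdel|].
    intros t Ht; apply Hd; replace (- t - - z) with (- (t - z)) by ring; rewrite Rabs_Ropp; exact Ht.
Qed.

Lemma is_solution_unique W V lam psi x0 : PC0 W -> PC0 V -> is_solution W V lam psi ->
  psi x0 = 0%C -> cD psi x0 = 0%C -> forall x, psi x = 0%C.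
Proof.
  intros HW HV Hsol H0 H0' x; assert (Hsol' := Hsol); destruct Hsol' as [S1 [S2 _]].
  assert (HE : forall y, energy psi y = 0).
  { apply (zero_propagates _ x0).
    - intros t; apply (ex_derive_continuous (V := R_NormedModule)).
      eexists; apply is_derive_energy; assumption.
    - intros z; apply (energy_vanishes_near W V lam); assumption.
    - unfold energy, cdot; rewrite H0, H0'; simpl; ring. }
  specialize (HE x); unfold energy in HE; rewrite !cdot_self in HE.
  pose proof (pow2_ge_0 (Cmod (psi x))); pose proof (pow2_ge_0 (Cmod (cD psi x))).
  apply Cmod_eq_0, NNPP; intros Hne; apply (pow_nonzero _ 2) in Hne; lra.
Qed.

(** * The two-dimensional solution space *)

(** Evaluated at [0] only: a solution is determined by its Cauchy data at any single point. *)
Definition wronskian (f g : R -> C) : C := (f 0 * cD g 0 - cD f 0 * g 0)%C.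

Lemma wronskian_scal_r f (c : C) : cdiff f -> wronskian f (fun t => c * f t)%C = 0%C.
Proof.
  intros Hf; unfold wronskian.
  rewrite (is_cderive_cD _ _ (is_cderive_scal c _ _ (cdiff_is_cderive _ Hf))); ring.
Qed.

Lemma is_solution_span W V lam f g psi : PC0 W -> PC0 V ->
  is_solution W V lam f -> is_solution W V lam g -> is_solution W V lam psi ->
  wronskian f g <> 0%C -> exists a b, forall x, psi x = (a * f x + b * g x)%C.
Proof.
  intros HW HV Sf Sg Sp Hw.
  set (a := ((psi 0 * cD g 0 - cD psi 0 * g 0) / wronskian f g)%C).
  set (b := ((f 0 * cD psi 0 - cD f 0 * psi 0) / wronskian f g)%C).
  exists a, b.
  set (chi := fun t => (1 * psi t + 1 * (- a * f t + - b * g t))%C).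
  assert (Z : forall x, chi x = 0%C).
  { assert (F1 := proj1 Sf); assert (G1 := proj1 Sg); assert (P1 := proj1 Sp).
    apply (is_solution_unique W V lam chi 0); try assumption.
    - apply is_solution_lin; [|apply is_solution_lin]; assumption.
    - unfold chi, a, b, wronskian in *; field; assumption.
    - unfold chi; rewrite cD_lin;
        [rewrite cD_lin by assumption | assumption | eapply is_cderive_cdiff, is_cderive_lin; assumption].
      unfold a, b, wronskian in *; field; assumption. }
  intros x; specialize (Z x); unfold chi in Z.
  transitivity (1 * psi x + 1 * (- a * f x + - b * g x) + (a * f x + b * g x))%C; [ring|].
  rewrite Z; ring.
Qed.

Lemma is_solution_dependent W V lam f g : PC0 W -> PC0 V ->
  is_solution W V lam f -> is_solution W V lam g -> wronskian f g = 0%C ->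
  (exists x, f x <> 0%C) -> exists c, forall x, g x = (c * f x)%C.
Proof.
  intros HW HV Sf Sg Hw [x0 Hx0].
  assert (Hnz : f 0 <> 0%C \/ cD f 0 <> 0%C).
  { apply NNPP; intros Hn; apply Hx0, (is_solution_unique W V lam f 0); try assumption;
      apply NNPP; intros Hm; apply Hn; auto. }
  assert (Hchi : forall c, (forall x, (1 * g x + - c * f x)%C = 0%C) -> forall x, g x = (c * f x)%C).
  { intros c Z x; specialize (Z x).
    transitivity (1 * g x + - c * f x + c * f x)%C; [ring | rewrite Z; ring]. }
  destruct Sf as [F1 F2], Sg as [G1 G2]; unfold wronskian in Hw.
  destruct Hnz as [H0|H0]; [exists (g 0 / f 0)%C | exists (cD g 0 / cD f 0)%C];
    apply Hchi, (is_solution_unique W V lam _ 0); try assumption;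
    try (apply is_solution_lin; split; assumption); rewrite ?cD_lin by assumption.
  - field; assumption.
  - apply (Cmult_eq_reg_l (f 0)); [|assumption].
    transitivity (f 0 * cD g 0 - cD f 0 * g 0)%C; [field; assumption | rewrite Hw; ring].
  - apply (Cmult_eq_reg_l (cD f 0)); [|assumption].
    transitivity (- (f 0 * cD g 0 - cD f 0 * g 0))%C; [field; assumption | rewrite Hw; ring].
  - field; assumption.
Qed.

Lemma wronskian_floquet_neq_0 W V lam gamma f g (m1 m2 : C) : PC0 W -> PC0 V ->
  is_solution W V lam f -> is_solution W V lam g -> (exists x, f x <> 0%C) -> (exists x, g x <> 0%C) ->
  (forall x, f (x + gamma) = (m1 * f x)%C) -> (forall x, g (x + gamma) = (m2 * g x)%C) ->
  m1 <> m2 -> wronskian f g <> 0%C.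
Proof.
  intros HW HV Sf Sg Hf [x0 Hg] Pf Pg Hm Hw.
  destruct (is_solution_dependent W V lam f g HW HV Sf Sg Hw Hf) as [c Hc].
  apply Hg, (Cmult_eq_0_r (m1 - m2));
    [|intros E; apply Hm; transitivity (m1 - m2 + m2)%C; [ring | rewrite E; ring]].
  transitivity (m1 * g x0 - m2 * g x0)%C; [ring|].
  rewrite <- Pg, !Hc, Pf; ring.
Qed.

(** * Floquet solutions and quasimomenta *)

Lemma Eset_ebl_mult W V lam k p : Cp 2 p -> (forall x, Dk W V k p x = (RtoC lam * p x)%C) ->
  Eset W V lam (fun x => ebl k x * p x)%C.
Proof.
  intros Hp HD; split; [apply Cp2_mult; [apply is_C2_ebl | exact Hp]|].
  intros x; apply Cp2_iff in Hp; destruct Hp as [P1 [P2 _]]; rewrite Lop_ebl, HD by assumption; ring.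
Qed.

Lemma Dk_eigen_of_Lop W V lam k p psi : Cp 2 p -> (forall x, psi x = (ebl k x * p x)%C) ->
  (forall x, Lop W V psi x = (RtoC lam * psi x)%C) -> forall x, Dk W V k p x = (RtoC lam * p x)%C.
Proof.
  intros Hp Hpsi HL x; apply Cp2_iff in Hp; destruct Hp as [P1 [P2 _]].
  apply (Cmult_eq_reg_l (ebl k x)); [|apply ebl_neq_0].
  rewrite <- Lop_ebl by assumption.
  replace (fun t => ebl k t * p t)%C with psi by (apply functional_extensionality; auto).
  rewrite HL, Hpsi; ring.
Qed.

Lemma floquet_factor W V lam gamma k psi : Eset W V lam psi ->
  (forall x, psi (x + gamma) = (multiplier gamma k * psi x)%C) ->
  exists p, Cpg 2 gamma p /\ (forall x, Dk W V k p x = (RtoC lam * p x)%C) /\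
            forall x, psi x = (ebl k x * p x)%C.
Proof.
  intros [HC HL] Hper.
  set (p := fun x => (ebl (- k) x * psi x)%C).
  assert (Hp : forall x, psi x = (ebl k x * p x)%C).
  { intros x; unfold p; rewrite Cmult_assoc, (Cmult_comm (ebl k x)), ebl_opp_mul; ring. }
  assert (Cp : Cp 2 p) by (apply Cp2_mult; [apply is_C2_ebl | exact HC]).
  exists p; split; [split; [exact Cp|] | split; [|exact Hp]].
  2: apply (Dk_eigen_of_Lop W V lam k p psi); assumption.
  intros x; unfold p; rewrite Hper, ebl_shift; unfold multiplier.
  transitivity ((ebl (- k) gamma * ebl k gamma) * (ebl (- k) x * psi x))%C; [ring|].
  rewrite ebl_opp_mul; ring.
Qed.

Lemma ebl_mult_shift gamma k p : periodic gamma p ->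
  forall x, (ebl k (x + gamma)%R * p (x + gamma)%R)%C = (multiplier gamma k * (ebl k x * p x))%C.
Proof. intros H x; rewrite H, ebl_shift; ring. Qed.

Lemma periodic_xmul_eq_0 gamma f g : gamma <> 0 -> periodic gamma f -> periodic gamma g ->
  (forall x, (f x + RtoC x * g x)%C = 0%C) -> forall x, g x = 0%C.
Proof.
  intros Hg Pf Pg H x; apply (Cmult_eq_0_r (RtoC gamma)); [|intros E; injection E; auto].
  transitivity ((f (x + gamma)%R + RtoC (x + gamma) * g (x + gamma)%R) - (f x + RtoC x * g x))%C.
  - rewrite Pf, Pg, RtoC_plus; ring.
  - rewrite !H; ring.
Qed.

Lemma periodic_ebl_independent gamma k1 k2 f g : gamma <> 0 -> ~ congr gamma k1 k2 ->
  periodic gamma f -> periodic gamma g ->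
  (forall x, (ebl k1 x * f x + ebl k2 x * g x)%C = 0%C) -> forall x, f x = 0%C /\ g x = 0%C.
Proof.
  intros Hg Hk Pf Pg H x.
  assert (Hm : (multiplier gamma k1 - multiplier gamma k2)%C <> 0%C).
  { intros E; apply Hk, congr_of_multiplier_eq; [exact Hg|].
    transitivity (multiplier gamma k1 - multiplier gamma k2 + multiplier gamma k2)%C; [ring|].
    rewrite E; ring. }
  assert (G : g x = 0%C).
  { apply (Cmult_eq_0_r (ebl k2 x)); [|apply ebl_neq_0].
    apply (Cmult_eq_0_r (multiplier gamma k1 - multiplier gamma k2)); [|exact Hm].
    transitivity (multiplier gamma k1 * (ebl k1 x * f x + ebl k2 x * g x)
                  - (ebl k1 (x + gamma)%R * f (x + gamma)%R + ebl k2 (x + gamma)%R * g (x + gamma)%R))%C.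
    - rewrite !ebl_mult_shift by assumption; ring.
    - rewrite !H; ring. }
  split; [|exact G].
  apply (Cmult_eq_0_r (ebl k1 x)); [|apply ebl_neq_0].
  rewrite <- (H x), G; ring.
Qed.

Lemma Eset_formB W V lam k q1 q2 : Cp 2 q1 -> Cp 2 q2 ->
  (forall x, Dk W V k q2 x = (RtoC lam * q2 x)%C) ->
  (forall x, Dk W V k q1 x = (RtoC lam * q1 x + (2 * Ci * k - W x) * q2 x + 2 * cD q2 x)%C) ->
  Eset W V lam (fun x => ebl k x * (q1 x + RtoC x * q2 x))%C.
Proof.
  intros C1 C2 E2 E1.
  assert (Cq : Cp 2 (fun t => q1 t + RtoC t * q2 t)%C)
    by (apply Cp2_plus; [|apply Cp2_mult; [apply is_C2_RtoC|]]; assumption).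
  split; [apply Cp2_mult; [apply is_C2_ebl | exact Cq]|].
  apply Cp2_iff in Cq, C1, C2; destruct Cq as [Q1 [Q2 _]], C1 as [A1 [A2 _]], C2 as [B1 [B2 _]].
  intros x; rewrite Lop_ebl, Dk_xmul, E1, E2 by assumption; ring.
Qed.

(** The coefficients of [1] and [x] separate because they are periodic. *)
Lemma formB_equations W V lam gamma k q1 q2 : gamma <> 0 -> periodic gamma W -> periodic gamma V ->
  Cpg 2 gamma q1 -> Cpg 2 gamma q2 ->
  Eset W V lam (fun t => ebl k t * (q1 t + RtoC t * q2 t))%C ->
  (forall x, Dk W V k q2 x = (RtoC lam * q2 x)%C) /\
  (forall x, Dk W V k q1 x = (RtoC lam * q1 x + (2 * Ci * k - W x) * q2 x + 2 * cD q2 x)%C).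
Proof.
  intros Hg HW HV [C1 P1] [C2 P2] [Cq HL].
  assert (Cq' : Cp 2 (fun t => q1 t + RtoC t * q2 t)%C)
    by (apply Cp2_plus; [|apply Cp2_mult; [apply is_C2_RtoC|]]; assumption).
  assert (HD := Dk_eigen_of_Lop W V lam k _ _ Cq' (fun x => eq_refl) HL).
  apply Cp2_iff in C1, C2; destruct C1 as [A1 [A2 _]], C2 as [B1 [B2 _]].
  set (f := fun x => (Dk W V k q1 x + (W x - 2 * Ci * k) * q2 x - 2 * cD q2 x - RtoC lam * q1 x)%C).
  set (g := fun x => (Dk W V k q2 x - RtoC lam * q2 x)%C).
  assert (Hfg : forall x, (f x + RtoC x * g x)%C = 0%C).
  { intros x; specialize (HD x); rewrite Dk_xmul in HD by assumption; unfold f, g.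
    transitivity ((Dk W V k q1 x + RtoC x * Dk W V k q2 x + (W x - 2 * Ci * k) * q2 x - 2 * cD q2 x)
                  - RtoC lam * (q1 x + RtoC x * q2 x))%C; [ring | rewrite HD; ring]. }
  assert (Pf : periodic gamma f).
  { intros x; unfold f; rewrite (Dk_periodic W V gamma k q1), (cD_periodic gamma q2), HW, P1, P2
      by assumption; reflexivity. }
  assert (Pg : periodic gamma g)
    by (intros x; unfold g; rewrite (Dk_periodic W V gamma k q2), P2 by assumption; reflexivity).
  assert (G0 := periodic_xmul_eq_0 gamma f g Hg Pf Pg Hfg).
  split; intros x.
  - specialize (G0 x); unfold g in G0.
    transitivity (Dk W V k q2 x - RtoC lam * q2 x + RtoC lam * q2 x)%C; [ring | rewrite G0; ring].
  - specialize (Hfg x); rewrite G0 in Hfg; unfold f in Hfg.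
    transitivity ((Dk W V k q1 x + (W x - 2 * Ci * k) * q2 x - 2 * cD q2 x - RtoC lam * q1 x
                   + RtoC x * 0) + (RtoC lam * q1 x + (2 * Ci * k - W x) * q2 x + 2 * cD q2 x))%C;
      [ring | rewrite Hfg; ring].
Qed.

Lemma inA_of_floquet gamma W V lam k psi : Eset W V lam psi -> (exists x, psi x <> 0%C) ->
  (forall x, psi (x + gamma) = (multiplier gamma k * psi x)%C) -> inA gamma W V lam k.
Proof.
  intros HE Hnz Hper; destruct (floquet_factor W V lam gamma k psi HE Hper) as [p [Hp [_ Hpsi]]].
  exists psi; split; [exact HE|]; split; [exact Hnz|]; left; exists p; split; assumption.
Qed.

Lemma eigen_solution_inA gamma W V lam (b : C) chi : 0 < gamma ->
  Eset W V lam chi -> (exists x, chi x <> 0%C) -> (forall x, chi (x + gamma) = (b * chi x)%C) ->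
  exists k, multiplier gamma k = b /\ inA gamma W V lam k.
Proof.
  intros Hg HE [x0 Hx0] Hper.
  assert (Hb : b <> 0%C).
  { intros ->; apply Hx0; replace x0 with ((x0 - gamma) + gamma) by ring; rewrite Hper; ring. }
  destruct (multiplier_surjective gamma b Hg Hb) as [k Hk]; exists k; split; [exact Hk|].
  apply (inA_of_floquet gamma W V lam k chi HE); [exists x0; exact Hx0 | rewrite Hk; exact Hper].
Qed.

Lemma cardA1_congr gamma W V lam k k' : cardA1 gamma W V lam ->
  inA gamma W V lam k -> inA gamma W V lam k' -> congr gamma k k'.
Proof.
  intros [ks [_ Hks]] Hk Hk'; apply (congr_trans _ _ ks); [apply congr_sym|]; auto.
Qed.

Lemma congr_periodic_factor gamma k1 k0 : gamma <> 0 -> congr gamma k1 k0 ->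
  exists u, is_C2 u /\ periodic gamma u /\ forall x, ebl k1 x = (ebl k0 x * u x)%C.
Proof.
  intros Hg Hc; destruct (congr_sym _ _ _ Hc) as [m ->].
  exists (ebl (RtoC (2 * IZR m * PI / gamma))); split; [apply is_C2_ebl|]; split.
  - intros x; apply ebl_lattice_periodic, Hg.
  - intros x; apply ebl_plus_l.
Qed.

Lemma inA_periodic_factor gamma W V lam k : gamma <> 0 -> periodic gamma W -> periodic gamma V ->
  inA gamma W V lam k -> exists p, Cpg 2 gamma p /\
    (forall x, Dk W V k p x = (RtoC lam * p x)%C) /\ exists x, p x <> 0%C.
Proof.
  intros Hg HW HV [psi [[HC HL] [[x0 Hx0] Hform]]].
  destruct Hform as [[p [Hp Hpsi]] | [[p1 [p2 [H1 [H2 [Hnz Hpsi]]]]] |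
                     [k' [p1 [p2 [Hk [[C1 P1] [[C2 P2] [Hn1 [_ Hpsi]]]]]]]]]].
  - exists p; split; [exact Hp|]; split.
    + apply (Dk_eigen_of_Lop W V lam k p psi); [apply Hp | assumption..].
    + exists x0; intros E; apply Hx0; rewrite Hpsi, E; ring.
  - exists p2; split; [exact H2|]; split; [|exact Hnz].
    apply (formB_equations W V lam gamma k p1 p2); try assumption.
    apply (Eset_ext W V lam psi); [exact Hpsi | split; assumption].
  - exists p1; split; [split; assumption|]; split; [|exact Hn1].
    destruct (Cp2_cdiff _ C1) as [A1 A2], (Cp2_cdiff _ C2) as [B1 B2].
    destruct (Cp2_cdiff _ (Cp2_mult _ _ (is_C2_ebl k) C1)) as [E1 E1'].
    destruct (Cp2_cdiff _ (Cp2_mult _ _ (is_C2_ebl k') C2)) as [E2 E2'].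
    assert (Hs : forall x, (ebl k x * (Dk W V k p1 x - RtoC lam * p1 x)
                            + ebl k' x * (Dk W V k' p2 x - RtoC lam * p2 x))%C = 0%C).
    { intros x; assert (L := HL x).
      replace psi with (fun t => 1 * (ebl k t * p1 t) + 1 * (ebl k' t * p2 t))%C in L
        by (apply functional_extensionality; intros t; rewrite Hpsi; ring).
      rewrite Lop_lin, !Lop_ebl in L by assumption.
      transitivity ((1 * (ebl k x * Dk W V k p1 x) + 1 * (ebl k' x * Dk W V k' p2 x))
                    - RtoC lam * (1 * (ebl k x * p1 x) + 1 * (ebl k' x * p2 x)))%C; [ring|].
      rewrite L; ring. }
    assert (Per : forall kk p, periodic gamma p ->
              periodic gamma (fun x => Dk W V kk p x - RtoC lam * p x)%C)
      by (intros kk p Hp x; rewrite (Dk_periodic W V gamma kk p), Hp by assumption; reflexivity).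
    intros x; destruct (periodic_ebl_independent gamma k k' _ _ Hg Hk (Per k p1 P1) (Per k' p2 P2) Hs x)
      as [Z _].
    transitivity (Dk W V k p1 x - RtoC lam * p1 x + RtoC lam * p1 x)%C; [ring | rewrite Z; ring].
Qed.

(** * The three spectral cases *)

(** A generalized eigenvector of the monodromy gives a solution of form (b). *)
Lemma formB_of_generalized_eigen gamma k p0 psi (a : C) : gamma <> 0 ->
  Cpg 2 gamma p0 -> (exists x, p0 x <> 0%C) -> Cp 2 psi -> a <> 0%C ->
  (forall x, psi (x + gamma) = (a * (ebl k x * p0 x) + multiplier gamma k * psi x)%C) ->
  formB gamma psi k.
Proof.
  intros Hg [C0 P0] [x0 Hx0] Cpsi Ha Hper.
  assert (Hgc : RtoC gamma <> 0%C) by (intros E; injection E; auto).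
  assert (Hm := multiplier_neq_0 gamma k).
  set (c := (a / (multiplier gamma k * RtoC gamma))%C).
  set (q2 := fun x => (c * p0 x)%C).
  set (q1 := fun x => (ebl (- k) x * psi x + (-1) * (RtoC x * q2 x))%C).
  exists q1, q2; split; [split|split; [split|split]].
  - apply Cp2_plus; [apply Cp2_mult; [apply is_C2_ebl | exact Cpsi]|].
    apply Cp2_scal, Cp2_mult; [apply is_C2_RtoC | apply Cp2_scal, C0].
  - intros x; unfold q1, q2, c; rewrite Hper, P0, !ebl_opp, RtoC_plus, ebl_shift.
    field; repeat split; first [apply ebl_neq_0 | assumption].
  - apply Cp2_scal, C0.
  - intros x; unfold q2; rewrite P0; reflexivity.
  - exists x0; apply Cmult_neq_0; [|exact Hx0].
    intros E; apply Ha; transitivity (c * (multiplier gamma k * RtoC gamma))%C;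
      [unfold c; field; split; assumption | rewrite E; ring].
  - intros x; unfold q1, q2; rewrite ebl_opp; field; apply ebl_neq_0.
Qed.

(** Otherwise the monodromy would have a second eigenvalue, i.e. a second quasimomentum class,
    or a Jordan block, i.e. a solution of form (b). *)
Lemma monodromy_scalar W V lam gamma k1 p0 psi0 : 0 < gamma ->
  Cpg 0 gamma W -> Cpg 0 gamma V -> Eset W V lam psi0 -> (exists x, psi0 x <> 0%C) ->
  Cpg 2 gamma p0 -> (forall x, psi0 x = (ebl k1 x * p0 x)%C) ->
  (forall k, inA gamma W V lam k -> congr gamma k1 k) ->
  ~ (exists psi k, Eset W V lam psi /\ formB gamma psi k) ->
  forall psi, Eset W V lam psi -> forall x, psi (x + gamma) = (multiplier gamma k1 * psi x)%C.
Proof.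
  intros Hg [PW HWp] [PV HVp] HE0 [x0 Hx0] [C0 P0] Hpsi0 Hcongr HnoB psi Hpsi.
  set (m := multiplier gamma k1).
  assert (Pphi : forall x, psi0 (x + gamma) = (m * psi0 x)%C)
    by (intros x; rewrite !Hpsi0; exact (ebl_mult_shift gamma k1 p0 P0 x)).
  assert (S0 := Eset_is_solution _ _ _ _ HE0); assert (S := Eset_is_solution _ _ _ _ Hpsi).
  destruct (classic (wronskian psi0 psi = 0%C)) as [Hw|Hw].
  { destruct (is_solution_dependent W V lam psi0 psi PW PV S0 S Hw (ex_intro _ x0 Hx0)) as [c Hc].
    intros x; rewrite !Hc, Pphi; ring. }
  destruct (is_solution_span W V lam psi0 psi _ PW PV S0 S (is_solution_shift _ _ _ _ _ HWp HVp S) Hw)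
    as [a [b Hab]]; simpl in Hab.
  destruct (classic (b = m)) as [->|Hb].
  - destruct (classic (a = 0%C)) as [->|Ha]; [intros x; rewrite Hab; ring|].
    exfalso; apply HnoB; exists psi, k1; split; [exact Hpsi|].
    apply (formB_of_generalized_eigen gamma k1 p0 psi a);
      [lra | split; assumption | | apply Hpsi | exact Ha |].
    + exists x0; intros E; apply Hx0; rewrite Hpsi0, E; ring.
    + intros x; rewrite Hab, Hpsi0; reflexivity.
  - exfalso.
    assert (Hbm : (b - m)%C <> 0%C)
      by (intros E; apply Hb; transitivity (b - m + m)%C; [ring | rewrite E; ring]).
    set (chi := fun t => (a / (b - m) * psi0 t + 1 * psi t)%C).
    assert (Tchi : forall x, chi (x + gamma) = (b * chi x)%C)
      by (intros x; unfold chi; rewrite Hab, Pphi; field; exact Hbm).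
    assert (Nchi : exists x, chi x <> 0%C).
    { apply not_all_ex_not; intros Z; apply Hw.
      replace psi with (fun t => (- (a / (b - m))) * psi0 t)%C
        by (apply functional_extensionality; intros t; symmetry;
            transitivity (chi t - a / (b - m) * psi0 t)%C; [unfold chi; ring | rewrite Z; ring]).
      apply wronskian_scal_r, S0. }
    destruct (eigen_solution_inA gamma W V lam b chi Hg (Eset_lin _ _ _ _ _ _ _ HE0 Hpsi) Nchi Tchi)
      as [k' [Hk' HA']].
    apply Hb; rewrite <- Hk'; symmetry; apply multiplier_congr; [lra | apply Hcongr, HA'].
Qed.

Open Scope C_scope.

Lemma sigma1_eigenspace gamma W V lam : 0 < gamma -> Cpg 0 gamma W -> Cpg 0 gamma V ->
  sigma1 gamma W V lam -> forall k0, inA gamma W V lam k0 ->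
  forall psi, Eset W V lam psi <->
    exists p, Cpg 2 gamma p /\ (forall x, Dk W V k0 p x = RtoC lam * p x) /\
              forall x, psi x = ebl k0 x * p x.
Proof.
  intros Hg HW HV [[psi0 [k1 [HE0 [Hnz [p0 [Cp0 Hpsi0]]]]]] [HA1 HnoB]] k0 Hk0 psi; split.
  - intros Hpsi; apply (floquet_factor W V lam gamma k0 psi Hpsi).
    assert (Hk1 : inA gamma W V lam k1)
      by (exists psi0; split; [|split; [|left; exists p0; split]]; assumption).
    rewrite <- (multiplier_congr gamma k1 k0) by (lra || apply (cardA1_congr gamma W V lam); assumption).
    apply (monodromy_scalar W V lam gamma k1 p0 psi0); try assumption.
    intros k Hk; apply (cardA1_congr gamma W V lam); assumption.
  - intros [p [[Cp _] [Dp Hp]]].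
    apply (Eset_ext W V lam (fun x => ebl k0 x * p x)); [intros; symmetry; auto|].
    apply Eset_ebl_mult; assumption.
Qed.

Lemma formB_span W V lam gamma k p1 p2 : 0 < gamma -> Cpg 0 gamma W -> Cpg 0 gamma V ->
  Cpg 2 gamma p1 -> Cpg 2 gamma p2 -> (exists x, p2 x <> 0) ->
  Eset W V lam (fun x => ebl k x * (p1 x + RtoC x * p2 x)) ->
  forall psi, Eset W V lam psi -> exists q1 q2, Cpg 2 gamma q1 /\ Cpg 2 gamma q2 /\
    forall x, psi x = ebl k x * (q1 x + RtoC x * q2 x).
Proof.
  intros Hg [PW HWp] [PV HVp] [C1 P1] [C2 P2] [x2 Hx2] HE1 psi Hpsi.
  set (psi1 := fun x => ebl k x * (p1 x + RtoC x * p2 x)).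
  destruct (formB_equations W V lam gamma k p1 p2) as [D2 _];
    [lra | assumption | assumption | split; assumption | split; assumption | assumption |].
  set (f1 := fun x => ebl k x * p2 x).
  assert (E1 : Eset W V lam f1) by (apply Eset_ebl_mult; assumption).
  assert (Hw : wronskian f1 psi1 <> 0).
  { intros Hw.
    destruct (is_solution_dependent W V lam f1 psi1 PW PV (Eset_is_solution _ _ _ _ E1)
                (Eset_is_solution _ _ _ _ HE1) Hw) as [c Hc].
    { exists x2; apply Cmult_neq_0; [apply ebl_neq_0 | exact Hx2]. }
    apply Hx2, (periodic_xmul_eq_0 gamma (fun x => p1 x - c * p2 x) p2); [lra | | exact P2 |].
    - intros x; rewrite P1, P2; reflexivity.
    - intros x; apply (Cmult_eq_0_r (ebl k x)); [|apply ebl_neq_0].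
      transitivity (psi1 x - c * f1 x); [unfold psi1, f1; ring | rewrite Hc; ring]. }
  destruct (is_solution_span W V lam f1 psi1 psi PW PV (Eset_is_solution _ _ _ _ E1)
              (Eset_is_solution _ _ _ _ HE1) (Eset_is_solution _ _ _ _ Hpsi) Hw) as [a [b Hab]].
  exists (fun x => b * p1 x + a * p2 x), (fun x => b * p2 x); split; [split|split; [split|]].
  - apply Cp2_plus; apply Cp2_scal; assumption.
  - intros x; rewrite P1, P2; reflexivity.
  - apply Cp2_scal; assumption.
  - intros x; rewrite P2; reflexivity.
  - intros x; rewrite Hab; unfold f1, psi1; ring.
Qed.

Lemma formB_change_quasimomentum gamma k1 k0 q1 q2 psi : gamma <> 0%R -> congr gamma k1 k0 ->
  Cpg 2 gamma q1 -> Cpg 2 gamma q2 -> (forall x, psi x = ebl k1 x * (q1 x + RtoC x * q2 x)) ->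
  exists r1 r2, Cpg 2 gamma r1 /\ Cpg 2 gamma r2 /\
    forall x, psi x = ebl k0 x * (r1 x + RtoC x * r2 x).
Proof.
  intros Hg Hc [C1 P1] [C2 P2] Hpsi.
  destruct (congr_periodic_factor gamma k1 k0 Hg Hc) as [u [Su [Pu Hu]]].
  exists (fun x => u x * q1 x), (fun x => u x * q2 x); split; [split|split; [split|]].
  - apply Cp2_mult; assumption.
  - intros x; rewrite Pu, P1; reflexivity.
  - apply Cp2_mult; assumption.
  - intros x; rewrite Pu, P2; reflexivity.
  - intros x; rewrite Hpsi, Hu; ring.
Qed.

Lemma sigma2_eigenspace gamma W V lam : 0 < gamma -> Cpg 0 gamma W -> Cpg 0 gamma V ->
  sigma2 gamma W V lam -> forall k0, inA gamma W V lam k0 ->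
  forall psi, Eset W V lam psi <->
    exists p1 p2, Cpg 2 gamma p1 /\ Cpg 2 gamma p2 /\
      (forall x, Dk W V k0 p2 x = RtoC lam * p2 x) /\
      (forall x, Dk W V k0 p1 x = RtoC lam * p1 x + (2 * Ci * k0 - W x) * p2 x + 2 * cD p2 x) /\
      forall x, psi x = ebl k0 x * (p1 x + RtoC x * p2 x).
Proof.
  intros Hg HW HV [[psi1 [k1 [HE1 [p1 [p2 [Cp1 [Cp2 [Hnz Hpsi1]]]]]]]] HA1] k0 Hk0 psi.
  assert (HE1' : Eset W V lam (fun x => ebl k1 x * (p1 x + RtoC x * p2 x)))
    by (apply (Eset_ext W V lam psi1); assumption).
  split.
  - intros Hpsi.
    assert (Hk1 : inA gamma W V lam k1).
    { exists psi1; split; [exact HE1|]; split; [|right; left; exists p1, p2; auto].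
      apply not_all_ex_not; intros Z; destruct Hnz as [x2 Hx2]; apply Hx2.
      apply (periodic_xmul_eq_0 gamma p1 p2); [lra | exact (proj2 Cp1) | exact (proj2 Cp2) |].
      intros x; apply (Cmult_eq_0_r (ebl k1 x)); [rewrite <- Hpsi1; apply Z | apply ebl_neq_0]. }
    destruct (formB_span W V lam gamma k1 p1 p2 Hg HW HV Cp1 Cp2 Hnz HE1' psi Hpsi)
      as [q1 [q2 [Cq1 [Cq2 Hq]]]].
    destruct (formB_change_quasimomentum gamma k1 k0 q1 q2 psi) as [r1 [r2 [Cr1 [Cr2 Hr]]]];
      try assumption; [lra | apply (cardA1_congr gamma W V lam); assumption|].
    destruct (formB_equations W V lam gamma k0 r1 r2) as [D2 D1];
      [lra | exact (proj2 HW) | exact (proj2 HV) | assumption | assumption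
      | apply (Eset_ext W V lam psi); assumption |].
    exists r1, r2; split; [|split; [|split; [|split]]]; assumption.
  - intros [q1 [q2 [[Cq1 _] [[Cq2 _] [E2 [E1 Hq]]]]]].
    apply (Eset_ext W V lam (fun x => ebl k0 x * (q1 x + RtoC x * q2 x))); [intros; symmetry; auto|].
    apply Eset_formB; assumption.
Qed.

Lemma Eset_lincomb W V lam l : List.Forall (fun cf : C * (R -> C) => Eset W V lam (snd cf)) l ->
  Eset W V lam (lincomb l).
Proof.
  induction l as [|[c f] l IH]; intros HF; [apply Eset_zero|].
  inversion HF as [|? ? Hf HF']; subst.
  apply (Eset_ext W V lam (fun t => c * f t + 1 * lincomb l t)); [intros t; simpl; ring|].
  apply Eset_lin; [exact Hf | apply IH, HF'].
Qed.

Lemma sigma3_eigenspace gamma W V lam : 0 < gamma -> Cpg 0 gamma W -> Cpg 0 gamma V ->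
  sigma3 gamma W V lam ->
  forall psi, Eset W V lam psi <->
    cspan (fun f => exists k p, inA gamma W V lam k /\ cardA2 gamma W V lam /\
            Cpg 2 gamma p /\ (forall x, Dk W V k p x = RtoC lam * p x) /\
            forall x, f x = ebl k x * p x) psi.
Proof.
  intros Hg [PW HWp] [PV HVp] [_ HA] psi; assert (Hg0 : gamma <> 0%R) by lra; split.
  - intros Hpsi; assert (HA' := HA); destruct HA' as [k1 [k2 [HA1 [HA2 [Hk _]]]]].
    destruct (inA_periodic_factor gamma W V lam k1 Hg0 HWp HVp HA1) as [p1 [[C1 P1] [D1 [x1 N1]]]].
    destruct (inA_periodic_factor gamma W V lam k2 Hg0 HWp HVp HA2) as [p2 [[C2 P2] [D2 [x2 N2]]]].
    set (f1 := fun x => ebl k1 x * p1 x); set (f2 := fun x => ebl k2 x * p2 x).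
    assert (E1 : Eset W V lam f1) by (apply Eset_ebl_mult; assumption).
    assert (E2 : Eset W V lam f2) by (apply Eset_ebl_mult; assumption).
    assert (Hw : wronskian f1 f2 <> 0).
    { apply (wronskian_floquet_neq_0 W V lam gamma f1 f2 (multiplier gamma k1) (multiplier gamma k2));
        try (apply Eset_is_solution; assumption); try assumption.
      - exists x1; apply Cmult_neq_0; [apply ebl_neq_0 | exact N1].
      - exists x2; apply Cmult_neq_0; [apply ebl_neq_0 | exact N2].
      - exact (ebl_mult_shift gamma k1 p1 P1).
      - exact (ebl_mult_shift gamma k2 p2 P2).
      - intros E; apply Hk, congr_of_multiplier_eq; assumption. }
    destruct (is_solution_span W V lam f1 f2 psi PW PV (Eset_is_solution _ _ _ _ E1)
                (Eset_is_solution _ _ _ _ E2) (Eset_is_solution _ _ _ _ Hpsi) Hw) as [a [b Hab]].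
    exists ((a, f1) :: (b, f2) :: nil); split.
    + repeat constructor; simpl.
      * exists k1, p1; split; [|split; [|split; [split|split; [|reflexivity]]]]; assumption.
      * exists k2, p2; split; [|split; [|split; [split|split; [|reflexivity]]]]; assumption.
    + intros x; simpl; rewrite Hab; ring.
  - intros [l [HF Hl]].
    apply (Eset_ext W V lam (lincomb l)); [intros; symmetry; auto|].
    apply Eset_lincomb; revert HF; apply Forall_impl.
    intros [c f] [k [p [_ [_ [[Cp _] [Dp Hf]]]]]].
    apply (Eset_ext W V lam (fun x => ebl k x * p x)); [intros; symmetry; apply Hf|].
    apply Eset_ebl_mult; assumption.
Qed.

Theorem theorem3p5 (gamma : R) (W V : R -> C) (lam : R)
  (hgamma : 0 < gamma) (hW : Cpg 0 gamma W) (hV : Cpg 0 gamma V) :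
  (sigma1 gamma W V lam -> forall k0, inA gamma W V lam k0 ->
     forall psi, Eset W V lam psi <->
       exists p, Cpg 2 gamma p /\ (forall x, Dk W V k0 p x = RtoC lam * p x) /\
                 forall x, psi x = ebl k0 x * p x) /\
  (sigma2 gamma W V lam -> forall k0, inA gamma W V lam k0 ->
     forall psi, Eset W V lam psi <->
       exists p1 p2, Cpg 2 gamma p1 /\ Cpg 2 gamma p2 /\
         (forall x, Dk W V k0 p2 x = RtoC lam * p2 x) /\
         (forall x, Dk W V k0 p1 x = RtoC lam * p1 x
                       + (2 * Ci * k0 - W x) * p2 x + 2 * cD p2 x) /\
         forall x, psi x = ebl k0 x * (p1 x + RtoC x * p2 x)) /\
  (sigma3 gamma W V lam ->
     forall psi, Eset W V lam psi <->
       cspan (fun f => exists k p, inA gamma W V lam k /\ cardA2 gamma W V lam /\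
               Cpg 2 gamma p /\ (forall x, Dk W V k p x = RtoC lam * p x) /\
               forall x, f x = ebl k x * p x) psi).
Proof.
  split; [|split].
  - apply sigma1_eigenspace; assumption.
  - apply sigma2_eigenspace; assumption.
  - apply sigma3_eigenspace; assumption.
Qed.
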